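(* For every $\beta\in[0,1)$ and every $G\in\mathscr S$, there exists a sequence of functions $G_N:\widehat\Lambda_N/N\to\mathbb R$, $N\in\mathbb N$, with $G_N(0)=G_N(1)=0$ for all $N$, such that $$\sup_{x\in\widehat\Lambda_N}|G_N(\tfrac xN)-G(\tfrac xN)|\to0\quad\text{and}\quad\sup_{x\in\widehat\Lambda_N}|\mathcal A^NG_N(\tfrac xN)-\alpha G''(\tfrac xN)|\to0\quad(N\to\infty).$$
   Context: Fix $\alpha,\alpha_L,\alpha_R>0$, $\beta\in[0,1)$, $\Lambda_N=\{1,\dots,N-1\}$, $\widehat\Lambda_N=\{0,\dots,N\}$. $A^N$ is the generator of a random walk on $\widehat\Lambda_N$ absorbed at $\{0,N\}$: for $f:\widehat\Lambda_N\to\mathbb R$, $A^Nf(x)=\mathbf 1_{\{x\in\Lambda_N\}}N^2\sum_{y\in\Lambda_N,|y-x|=1}\alpha(f(y)-f(x))+\mathbf 1_{\{x=1\}}N^{2-\beta}\alpha_L(f(0)-f(1))+\mathbf 1_{\{x=N-1\}}N^{2-\beta}\alpha_R(f(N)-f(N-1))$ (so $A^Nf(0)=A^Nf(N)=0$). For $F:\widehat\Lambda_N/N\to\mathbb R$ set $\mathcal A^NF(\tfrac xN):=A^N[F(\tfrac\cdot N)](x)$. $\mathscr S$ is the Dirichlet test function space: with $\mathcal L$ the nonnegative self-adjoint operator $F\mapsto-\alpha F''$ on $L^2([0,1])$ with domain $\{F\in\mathcal W^{1,2}_0:F''\in L^2\}$, eigenvalues $\lambda_n$ and orthonormal eigenbasis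 $\psi_n$, $\mathscr S=\{F\in L^2:\sum_n(1+\lambda_n)^k\langle F,\psi_n\rangle^2<\infty\ \forall k\in\mathbb Z\}$; its elements are $\mathcal C^\infty([0,1])$ functions (derivatives extend continuously to $[0,1]$). *)

From Stdlib Require Import Reals Lra Lia List Bool.
Open Scope bool_scope.
From Coquelicot Require Import Coquelicot.
Open Scope R_scope.

(* A function F : Lambda_hat_N / N -> R is represented by f : nat -> R,
   with f x standing for F (x/N), x in {0,...,N}. *)

(* Generator A^N of the random walk on {0,...,N} absorbed at {0,N}:
   A^N f(x) = 1_{x in Lambda_N} [ N^2 sum_{y in Lambda_N, |y-x|=1} alpha (f y - f x)
              + 1_{x=1} N^{2-beta} alphaL (f 0 - f 1)
              + 1_{x=N-1} N^{2-beta} alphaR (f N - f (N-1)) ]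
   (so A^N f(0) = A^N f(N) = 0). *)
Definition genA (alpha alphaL alphaR beta : R) (N : nat) (f : nat -> R) (x : nat) : R :=
  if (1 <=? x)%nat && (x <? N)%nat then
      INR N ^ 2 * alpha *
        ((if (2 <=? x)%nat then f (x - 1)%nat - f x else 0)
       + (if (x + 1 <? N)%nat then f (x + 1)%nat - f x else 0))
    + (if (x =? 1)%nat then Rpower (INR N) (2 - beta) * alphaL * (f 0%nat - f 1%nat) else 0)
    + (if (x =? N - 1)%nat then Rpower (INR N) (2 - beta) * alphaR * (f N - f (N - 1)%nat) else 0)
  else 0.

(* sup_{x in {0,...,N}} h x, for h >= 0 (finite maximum). *)
Definition sup_grid (N : nat) (h : nat -> R) : R :=
  fold_right Rmax 0 (map h (seq 0 (S N))).

(* Eigenvalues / orthonormal eigenbasis of L F = - alpha F'' on L^2([0,1])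
   with Dirichlet boundary conditions:
   lambda_n = alpha (n pi)^2, psi_n(u) = sqrt 2 sin (n pi u), n >= 1. *)
Definition lam (alpha : R) (n : nat) : R := alpha * (INR n * PI) ^ 2.
Definition psi (n : nat) (u : R) : R := sqrt 2 * sin (INR n * PI * u).

Definition coef (F : R -> R) (n : nat) : R := RInt (fun u => F u * psi n u) 0 1.

Definition cont_on_01 (F : R -> R) : Prop :=
  forall x, 0 <= x <= 1 -> forall eps, 0 < eps -> exists delta, 0 < delta /\
    forall y, 0 <= y <= 1 -> Rabs (y - x) < delta -> Rabs (F y - F x) < eps.

Definition in_S (alpha : R) (G : R -> R) : Prop :=
  forall k : Z,
    ex_series (fun n : nat => powerRZ (1 + lam alpha (S n)) k * (coef G (S n)) ^ 2).

Definition second_deriv01 (G : R -> R) (u : R) : R :=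
  if Rlt_dec 0 u then
    if Rlt_dec u 1 then Derive_n G 2 u
    else Lim_seq (fun n => Derive_n G 2 (1 - / (INR n + 2)))
  else Lim_seq (fun n => Derive_n G 2 (/ (INR n + 2))).

(* Write c_k for the coefficient of G on the eigenfunction psi (k+1) = sqrt 2 sin ((k+1) pi u).
   Membership in S gives sum_k |c_k| k^3 < oo, so the sine series F = sum_k c_k psi (k+1)
   is C^3 with termwise derivatives, and F and F'' vanish at 0 and 1.  Completeness of the
   sine system identifies F with G on [0,1].  On the grid we take
   G_N x = F (x/N) + p_N + q_N x in the bulk and 0 at the absorbing sites: the discrete
   Laplacian does not see the affine correction, and p_N, q_N are chosen so that the two
   boundary equations reduce to the Dirichlet discrete Laplacian of F.  They are
   O(N^(beta-1)), and A^N G_N - alpha F'' is a central-difference error, O(1/N). *)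

From Stdlib Require Import Reals Lra Lia Arith List.
From Coquelicot Require Import Coquelicot.
Open Scope R_scope.

Lemma PI_gt_1 : 1 < PI.
Proof. pose proof PI2_3_2; lra. Qed.

Lemma sin_INR_mult_PI n : sin (INR n * PI) = 0.
Proof. apply sin_eq_0_1. exists (Z.of_nat n). now rewrite <- INR_IZR_INZ. Qed.

(* Coquelicot's generic lemmas, instantiated for real functions where inference fails. *)
Lemma ex_derive_continuous_R (f : R -> R) x : ex_derive f x -> continuous f x.
Proof. apply (ex_derive_continuous (K := R_AbsRing) (V := R_NormedModule)). Qed.

Lemma continuous_Rmult (f g : R -> R) x :
  continuous f x -> continuous g x -> continuous (fun y => f y * g y) x.
Proof. intros; apply (continuous_mult (U := R_UniformSpace) (K := R_AbsRing)); auto. Qed.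

Lemma continuous_Rplus (f g : R -> R) x :
  continuous f x -> continuous g x -> continuous (fun y => f y + g y) x.
Proof. intros; apply (continuous_plus (U := R_UniformSpace) (V := R_NormedModule)); auto. Qed.

Lemma continuous_Rminus (f g : R -> R) x :
  continuous f x -> continuous g x -> continuous (fun y => f y - g y) x.
Proof. intros; apply (continuous_minus (U := R_UniformSpace) (V := R_NormedModule)); auto. Qed.

Lemma continuous_Rconst (a x : R) : continuous (fun _ : R => a) x.
Proof. apply (continuous_const (U := R_UniformSpace) (V := R_UniformSpace)). Qed.

Lemma continuous_Rscal (a : R) (f : R -> R) x :
  continuous f x -> continuous (fun y => a * f y) x.
Proof. intros; apply continuous_Rmult; auto using continuous_Rconst. Qed.

Lemma ex_RInt_continuous_R (f : R -> R) a b : (forall x, continuous f x) -> ex_RInt f a b.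
Proof. intros; apply (ex_RInt_continuous (V := R_CompleteNormedModule)); auto. Qed.

Lemma RInt_ext_R (f g : R -> R) a b :
  (forall x, Rmin a b < x < Rmax a b -> f x = g x) -> RInt f a b = RInt g a b.
Proof. intros; apply (RInt_ext (V := R_CompleteNormedModule)); auto. Qed.

Lemma RInt_Rplus (f g : R -> R) a b : ex_RInt f a b -> ex_RInt g a b ->
  RInt (fun x => f x + g x) a b = RInt f a b + RInt g a b.
Proof. intros; apply (RInt_plus (V := R_CompleteNormedModule)); auto. Qed.

Lemma RInt_Rminus (f g : R -> R) a b : ex_RInt f a b -> ex_RInt g a b ->
  RInt (fun x => f x - g x) a b = RInt f a b - RInt g a b.
Proof. intros; apply (RInt_minus (V := R_CompleteNormedModule)); auto. Qed.

Lemma RInt_Rscal (f : R -> R) a b k : ex_RInt f a b ->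
  RInt (fun x => k * f x) a b = k * RInt f a b.
Proof. intros; apply (RInt_scal (V := R_CompleteNormedModule)); auto. Qed.

Lemma ex_series_le_R (a b : nat -> R) :
  (forall n, Rabs (a n) <= b n) -> ex_series b -> ex_series a.
Proof. intros Hab Hb; apply (@ex_series_le R_AbsRing R_CompleteNormedModule) with b; auto. Qed.

Lemma Rabs_Series_minus_sum_n (a M : nat -> R) :
  (forall k, Rabs (a k) <= M k) -> ex_series M ->
  forall N, Rabs (Series a - sum_n a N) <= Series M - sum_n M N.
Proof.
  intros HaM HM N.
  assert (Habs : ex_series (fun k => Rabs (a k))).
  { apply ex_series_le_R with M; auto. intros k; rewrite Rabs_Rabsolu; auto. }
  assert (Ha : ex_series a) by (apply ex_series_Rabs; auto).
  rewrite (Series_incr_n a (S N)), (Series_incr_n M (S N)) by (lia || auto).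
  simpl pred. rewrite !sum_n_Reals.
  replace (sum_f_R0 a N + Series (fun k => a (S N + k)%nat) - sum_f_R0 a N)
    with (Series (fun k => a (S N + k)%nat)) by ring.
  replace (sum_f_R0 M N + Series (fun k => M (S N + k)%nat) - sum_f_R0 M N)
    with (Series (fun k => M (S N + k)%nat)) by ring.
  eapply Rle_trans; [apply Series_Rabs, (ex_series_incr_n (fun k => Rabs (a k)) (S N)); auto|].
  apply Series_le; [intros k; split; [apply Rabs_pos | apply HaM]|].
  apply (ex_series_incr_n M (S N)); auto.
Qed.

Lemma is_lim_seq_Series_minus_sum_n (M : nat -> R) :
  ex_series M -> is_lim_seq (fun N => Series M - sum_n M N) 0.
Proof.
  intros HM. replace 0 with (Series M - Series M) by ring.
  apply (is_lim_seq_minus _ _ (Series M) (Series M)).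
  - apply is_lim_seq_const.
  - apply Series_correct; auto.
  - reflexivity.
Qed.

Lemma eq_0_of_Rabs_le_is_lim_seq_0 (x : R) (t : nat -> R) :
  eventually (fun N => Rabs x <= t N) -> is_lim_seq t 0 -> x = 0.
Proof.
  intros Hx Ht.
  assert (H := is_lim_seq_le_loc (fun _ => Rabs x) t (Rabs x) 0 Hx (is_lim_seq_const _) Ht).
  simpl in H. pose proof (Rabs_pos x).
  apply Rabs_eq_0. lra.
Qed.

Lemma INR_div_INR_bounds k n : (0 < n)%nat -> (k <= n)%nat -> 0 <= INR k / INR n <= 1.
Proof.
  intros Hn Hk. assert (0 < INR n) by (apply lt_0_INR; auto).
  split.
  - apply Rmult_le_pos; [apply pos_INR | left; apply Rinv_0_lt_compat; lra].
  - apply (Rmult_le_reg_r (INR n)); auto. unfold Rdiv.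
    rewrite Rmult_assoc, Rinv_l, Rmult_1_r, Rmult_1_l by lra. apply le_INR; auto.
Qed.

Lemma is_lim_seq_inv_INR_plus_2 : is_lim_seq (fun n => / (INR n + 2)) 0.
Proof.
  replace (Finite 0) with (Rbar_inv p_infty) by reflexivity.
  apply is_lim_seq_inv; [| discriminate].
  apply (is_lim_seq_plus _ _ p_infty 2); [apply is_lim_seq_INR | apply is_lim_seq_const | reflexivity].
Qed.

Lemma inv_INR_plus_2_bounds n : 0 < / (INR n + 2) < 1.
Proof.
  pose proof (pos_INR n). split; [apply Rinv_0_lt_compat; lra|].
  rewrite <- Rinv_1. apply Rinv_lt_contravar; lra.
Qed.

Lemma is_lim_seq_1_minus_inv_INR_plus_2 : is_lim_seq (fun n => 1 - / (INR n + 2)) 1.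
Proof.
  replace (Finite 1) with (Rbar_minus 1 0) by (simpl; f_equal; ring).
  apply is_lim_seq_minus'; [apply is_lim_seq_const | apply is_lim_seq_inv_INR_plus_2].
Qed.

Lemma is_lim_seq_scal_l_0 (a : R) (u : nat -> R) :
  is_lim_seq u 0 -> is_lim_seq (fun n => a * u n) 0.
Proof.
  intros Hu. replace (Finite 0) with (Rbar_mult a 0) by (simpl; f_equal; ring).
  apply is_lim_seq_scal_l, Hu.
Qed.

(** * Sine series with summable coefficients *)

Definition freq (k : nat) : R := INR (S k) * PI.

(* [sine_term c j k] is the [j]-th derivative of [u |-> c k * psi (S k) u]. *)
Definition sine_term (c : nat -> R) (j k : nat) (u : R) : R :=
  c k * sqrt 2 * freq k ^ j * sin (freq k * u + INR j * (PI / 2)).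

Definition sine_partial (c : nat -> R) (j n : nat) (u : R) : R :=
  sum_n (fun k => sine_term c j k u) n.

Definition sine_series (c : nat -> R) (j : nat) (u : R) : R :=
  Series (fun k => sine_term c j k u).

Definition sine_majorant (c : nat -> R) (j k : nat) : R := Rabs (c k) * sqrt 2 * freq k ^ j.

Lemma freq_ge_1 k : 1 <= freq k.
Proof.
  unfold freq. pose proof PI_gt_1. rewrite S_INR. pose proof (pos_INR k).
  replace 1 with (1 * 1) by ring. apply Rmult_le_compat; lra.
Qed.

Lemma freq_pos k : 0 < freq k.
Proof. pose proof (freq_ge_1 k); lra. Qed.

Lemma sine_majorant_ge0 c j k : 0 <= sine_majorant c j k.
Proof.
  unfold sine_majorant. pose proof (freq_pos k).
  apply Rmult_le_pos; [apply Rmult_le_pos; [apply Rabs_pos | apply sqrt_pos] | apply pow_le; lra].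
Qed.

Lemma Rabs_sine_term_le c j k u : Rabs (sine_term c j k u) <= sine_majorant c j k.
Proof.
  unfold sine_term. pose proof (freq_pos k).
  rewrite !Rabs_mult, (Rabs_right (sqrt 2)), (Rabs_right (freq k ^ j))
    by (apply Rle_ge; (apply sqrt_pos || (apply pow_le; lra))).
  rewrite <- (Rmult_1_r (sine_majorant c j k)).
  apply Rmult_le_compat_l; [apply sine_majorant_ge0 | apply Rabs_le, SIN_bound].
Qed.

Lemma is_derive_sine_term c j k u : is_derive (sine_term c j k) u (sine_term c (S j) k u).
Proof.
  unfold sine_term. auto_derive; auto.
  rewrite S_INR.
  replace (freq k * u + (INR j + 1) * (PI / 2)) with (PI / 2 + (freq k * u + INR j * (PI / 2))) by ring.
  rewrite <- cos_sin. simpl; ring.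
Qed.

Lemma is_derive_sine_partial c j n u :
  is_derive (sine_partial c j n) u (sine_partial c (S j) n u).
Proof. apply (is_derive_sum_n (fun k => sine_term c j k)); intros; apply is_derive_sine_term. Qed.

Lemma continuous_sine_term c j k u : continuous (sine_term c j k) u.
Proof. apply ex_derive_continuous_R. eexists; apply is_derive_sine_term. Qed.

Lemma continuous_sine_partial c j n u : continuous (sine_partial c j n) u.
Proof. apply ex_derive_continuous_R. eexists; apply is_derive_sine_partial. Qed.

Lemma sine_series_eq_0 c j u :
  (forall k, sin (freq k * u + INR j * (PI / 2)) = 0) -> sine_series c j u = 0.
Proof.
  intros Hsin. unfold sine_series.
  rewrite (Series_ext _ (fun k => 0 * sine_term c j k u)), Series_scal_l by
    (intros k; unfold sine_term; rewrite Hsin; ring).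
  ring.
Qed.

Lemma sine_series_0_at_0 c : sine_series c 0 0 = 0.
Proof.
  apply sine_series_eq_0. intros k.
  replace (freq k * 0 + INR 0 * (PI / 2)) with 0 by (simpl; ring). apply sin_0.
Qed.

Lemma sine_series_0_at_1 c : sine_series c 0 1 = 0.
Proof.
  apply sine_series_eq_0. intros k.
  replace (freq k * 1 + INR 0 * (PI / 2)) with (INR (S k) * PI) by (unfold freq; simpl; ring).
  apply sin_INR_mult_PI.
Qed.

Lemma sine_series_2_at_0 c : sine_series c 2 0 = 0.
Proof.
  apply sine_series_eq_0. intros k.
  replace (freq k * 0 + INR 2 * (PI / 2)) with PI by (simpl; field). apply sin_PI.
Qed.

Lemma sine_series_2_at_1 c : sine_series c 2 1 = 0.
Proof.
  apply sine_series_eq_0. intros k.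
  replace (freq k * 1 + INR 2 * (PI / 2)) with (INR (S k) * PI + PI) by (unfold freq; simpl; field).
  rewrite neg_sin, sin_INR_mult_PI. ring.
Qed.

Section SummableCoefficients.

Variable c : nat -> R.
Hypothesis Hc : ex_series (fun k => Rabs (c k) * freq k ^ 3).

Lemma ex_series_sine_majorant j : (j <= 3)%nat -> ex_series (sine_majorant c j).
Proof.
  intros Hj.
  apply ex_series_le_R with (fun k => sqrt 2 * (Rabs (c k) * freq k ^ 3)).
  - intros k. rewrite Rabs_right by (apply Rle_ge, sine_majorant_ge0).
    unfold sine_majorant.
    replace (sqrt 2 * (Rabs (c k) * freq k ^ 3)) with (Rabs (c k) * sqrt 2 * freq k ^ 3) by ring.
    apply Rmult_le_compat_l; [apply Rmult_le_pos; [apply Rabs_pos | apply sqrt_pos]|].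
    apply Rle_pow; auto using freq_ge_1.
  - apply (ex_series_scal_l (V := R_NormedModule)); auto.
Qed.

Lemma ex_series_sine_term j u : (j <= 3)%nat -> ex_series (fun k => sine_term c j k u).
Proof.
  intros Hj. apply ex_series_le_R with (sine_majorant c j);
    auto using Rabs_sine_term_le, ex_series_sine_majorant.
Qed.

Lemma Rabs_sine_series_minus_partial j N u : (j <= 3)%nat ->
  Rabs (sine_series c j u - sine_partial c j N u)
    <= Series (sine_majorant c j) - sum_n (sine_majorant c j) N.
Proof.
  intros Hj. apply Rabs_Series_minus_sum_n;
    auto using Rabs_sine_term_le, ex_series_sine_majorant.
Qed.

Lemma Rabs_sine_series_le j u : (j <= 3)%nat -> Rabs (sine_series c j u) <= Series (sine_majorant c j).
Proof.
  intros Hj. pose proof (Rabs_sine_series_minus_partial j 0 u Hj) as Htail.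
  unfold sine_partial in Htail. rewrite !sum_O in Htail.
  pose proof (Rabs_sine_term_le c j 0 u).
  pose proof (Rabs_triang_inv (sine_series c j u) (sine_term c j 0 u)). lra.
Qed.

Lemma Lim_seq_sine_partial j u : (j <= 3)%nat ->
  Lim_seq (fun n => sine_partial c j n u) = sine_series c j u.
Proof. intros Hj. apply is_lim_seq_unique, Series_correct, ex_series_sine_term; auto. Qed.

Lemma CVU_sine_partial j : (j <= 3)%nat -> CVU_dom (sine_partial c j) (fun _ => True).
Proof.
  intros Hj eps.
  pose proof (is_lim_seq_Series_minus_sum_n _ (ex_series_sine_majorant j Hj)) as Htail.
  apply is_lim_seq_spec in Htail. destruct (Htail eps) as [N0 HN0].
  exists N0. intros n Hn x _.
  rewrite Lim_seq_sine_partial, Rabs_minus_sym by auto. simpl.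
  eapply Rle_lt_trans; [apply Rabs_sine_series_minus_partial; auto|].
  specialize (HN0 n Hn). rewrite Rminus_0_r in HN0.
  eapply Rle_lt_trans; [apply Rle_abs | exact HN0].
Qed.

Lemma is_derive_sine_series j u : (j <= 2)%nat ->
  is_derive (sine_series c j) u (sine_series c (S j) u).
Proof.
  intros Hj.
  assert (HD : forall n x, Derive (sine_partial c j n) x = sine_partial c (S j) n x)
    by (intros; apply is_derive_unique, is_derive_sine_partial).
  assert (Hcont : forall n x, True -> continuity_pt (Derive (sine_partial c j n)) x).
  { intros n x _. apply continuity_pt_filterlim.
    eapply continuous_ext; [intros t; symmetry; apply HD | apply continuous_sine_partial]. }
  assert (HCVU : CVU_dom (fun n x => Derive (sine_partial c j n) x) (fun _ => True)).
  { intros eps. destruct (CVU_sine_partial (S j) ltac:(lia) eps) as [N HN]. exists N.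
    intros n Hn x _.
    rewrite HD, (Lim_seq_ext _ (fun m => sine_partial c (S j) m x)) by (intros; apply HD).
    apply HN; auto. }
  pose proof (CVU_Derive _ _ open_true (fun _ _ _ _ _ _ => I) (CVU_sine_partial j ltac:(lia))
    (fun n x _ => ex_intro _ _ (is_derive_sine_partial c j n x)) Hcont HCVU u I) as H.
  rewrite (Lim_seq_ext _ (fun m => sine_partial c (S j) m u)) in H by (intros; apply HD).
  rewrite Lim_seq_sine_partial in H by lia.
  eapply is_derive_ext; [| exact H].
  intros t. simpl. rewrite Lim_seq_sine_partial by lia. reflexivity.
Qed.

Lemma continuous_sine_series j u : (j <= 2)%nat -> continuous (sine_series c j) u.
Proof. intros Hj. apply ex_derive_continuous_R. eexists; apply is_derive_sine_series; auto. Qed.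

End SummableCoefficients.

(** * The coefficients of a test function *)

Lemma ex_series_inv_INR_S_sq : ex_series (fun n => / INR (S n) ^ 2).
Proof.
  apply ex_series_le_R with (fun n => 2 * (/ INR (S n) - / INR (S (S n)))).
  - intros n. pose proof (pos_INR n).
    rewrite Rabs_right by (apply Rle_ge; left; apply Rinv_0_lt_compat, pow_lt, lt_0_INR; lia).
    rewrite !S_INR. apply Rminus_le_0.
    replace (2 * (/ (INR n + 1) - / (INR n + 1 + 1)) - / (INR n + 1) ^ 2)
      with (INR n / ((INR n + 1) ^ 2 * (INR n + 2))) by (field; lra).
    apply Rmult_le_pos; auto. left; apply Rinv_0_lt_compat.
    apply Rmult_lt_0_compat; [apply pow_lt |]; lra.
  - exists 2. unfold is_series.
    apply (filterlim_ext (fun N => 2 * (1 - / INR (S (S N))))).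
    + intros N. induction N.
      * rewrite sum_O. simpl. field.
      * rewrite sum_Sn, <- IHN. unfold plus; simpl. ring.
    + change (is_lim_seq (fun N => 2 * (1 - / INR (S (S N)))) 2).
      replace (Finite 2) with (Rbar_mult 2 (1 - 0)) by (simpl; f_equal; ring).
      apply is_lim_seq_scal_l, (is_lim_seq_minus _ _ 1 0); [apply is_lim_seq_const| |reflexivity].
      apply (is_lim_seq_incr_1 (fun n => / INR (S n))), (is_lim_seq_incr_1 (fun n => / INR n)).
      replace (Finite 0) with (Rbar_inv p_infty) by reflexivity.
      apply is_lim_seq_inv; [apply is_lim_seq_INR | discriminate].
Qed.

(* AM-GM, [2 |c| w^3 <= c^2 w^8 + w^-2], followed by [w^8 <= (1 + alpha w^2)^4 / alpha^4]. *)
Lemma Rabs_mult_pow3_le alpha c w : 0 < alpha -> 0 < w ->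
  Rabs c * w ^ 3 <= / 2 * (/ alpha ^ 4 * ((1 + alpha * w ^ 2) ^ 4 * c ^ 2)) + / 2 * / w ^ 2.
Proof.
  intros Ha Hw.
  assert (Hamgm : 2 * (Rabs c * w ^ 3) <= c ^ 2 * w ^ 8 + / w ^ 2).
  { assert (Hsq : 0 <= (Rabs c * w ^ 4 - / w) ^ 2) by apply pow2_ge_0.
    replace ((Rabs c * w ^ 4 - / w) ^ 2)
      with (Rabs c ^ 2 * w ^ 8 - 2 * (Rabs c * w ^ 3) + / w ^ 2) in Hsq by (field; lra).
    rewrite pow2_abs in Hsq. lra. }
  assert (Hw8 : w ^ 8 <= / alpha ^ 4 * (1 + alpha * w ^ 2) ^ 4).
  { replace (w ^ 8) with (/ alpha ^ 4 * (alpha * w ^ 2) ^ 4) by (field; lra).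
    apply Rmult_le_compat_l; [left; apply Rinv_0_lt_compat, pow_lt; lra|].
    apply pow_incr. split; [apply Rmult_le_pos; [lra | apply pow_le; lra] | lra]. }
  assert (c ^ 2 * w ^ 8 <= / alpha ^ 4 * ((1 + alpha * w ^ 2) ^ 4 * c ^ 2)).
  { replace (/ alpha ^ 4 * ((1 + alpha * w ^ 2) ^ 4 * c ^ 2))
      with (c ^ 2 * (/ alpha ^ 4 * (1 + alpha * w ^ 2) ^ 4)) by ring.
    apply Rmult_le_compat_l; auto using pow2_ge_0. }
  lra.
Qed.

Lemma inv_freq_sq_le k : / freq k ^ 2 <= / INR (S k) ^ 2.
Proof.
  assert (H1 : 1 <= INR (S k)) by (apply (le_INR 1); lia).
  apply Rinv_le_contravar; [apply pow_lt; lra|].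
  unfold freq. rewrite Rpow_mult_distr.
  rewrite <- (Rmult_1_r (INR (S k) ^ 2)) at 1.
  apply Rmult_le_compat_l; [apply pow_le; lra|].
  pose proof PI_gt_1. replace 1 with (1 ^ 2) by ring. apply pow_incr; lra.
Qed.

Lemma in_S_coef_decay alpha G : 0 < alpha -> in_S alpha G ->
  ex_series (fun k => Rabs (coef G (S k)) * freq k ^ 3).
Proof.
  intros Ha HS.
  apply ex_series_le_R with
    (fun k => / 2 * (/ alpha ^ 4 * (powerRZ (1 + lam alpha (S k)) 4 * coef G (S k) ^ 2))
              + / 2 * / INR (S k) ^ 2).
  - intros k. pose proof (freq_pos k).
    rewrite Rabs_right by (apply Rle_ge, Rmult_le_pos; [apply Rabs_pos | apply pow_le; lra]).
    replace (powerRZ (1 + lam alpha (S k)) 4) with ((1 + alpha * freq k ^ 2) ^ 4)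
      by (simpl; unfold lam, freq; ring).
    pose proof (inv_freq_sq_le k).
    pose proof (Rabs_mult_pow3_le alpha (coef G (S k)) (freq k) Ha ltac:(lra)). lra.
  - apply (ex_series_plus (V := R_NormedModule)).
    + do 2 apply (ex_series_scal_l (V := R_NormedModule)). exact (HS 4%Z).
    + apply (ex_series_scal_l (V := R_NormedModule)), ex_series_inv_INR_S_sq.
Qed.

Lemma psi_0 u : psi 0 u = 0.
Proof. unfold psi. simpl. rewrite !Rmult_0_l, sin_0. ring. Qed.

Lemma psi_S k u : psi (S k) u = sqrt 2 * sin (freq k * u).
Proof. reflexivity. Qed.

Lemma continuous_psi n u : continuous (psi n) u.
Proof. apply ex_derive_continuous_R. unfold psi. auto_derive; auto. Qed.

Lemma sine_term_0 c k u : sine_term c 0 k u = c k * psi (S k) u.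
Proof. unfold sine_term. rewrite psi_S. simpl. rewrite Rmult_0_l, Rplus_0_r. ring. Qed.

(* The cast [(RInt _ _ _ : R)] puts the equation in [R] rather than in Coquelicot's module
   type, so that [ring] applies to it. *)
Lemma RInt_cos_mult r : r <> 0 -> sin r = 0 -> (RInt (fun u => cos (r * u)) 0 1 : R) = 0.
Proof.
  intros Hr Hs. apply is_RInt_unique.
  assert (H := is_RInt_derive (V := R_CompleteNormedModule)
                 (fun u => sin (r * u) / r) (fun u => cos (r * u)) 0 1).
  cbv beta in H.
  match type of H with _ -> _ -> is_RInt _ _ _ ?v => replace v with 0 in H end.
  - apply H; intros x _.
    + auto_derive; auto. field; auto.
    + apply ex_derive_continuous_R. auto_derive; auto.
  - rewrite Rmult_1_r, Rmult_0_r, sin_0, Hs.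
    change (0 = 0 / r - 0 / r). field; auto.
Qed.

Lemma RInt_psi_psi k i :
  (RInt (fun u => psi (S k) u * psi (S i) u) 0 1 : R) = if Nat.eq_dec k i then 1 else 0.
Proof.
  pose proof (freq_pos k); pose proof (freq_pos i).
  rewrite (RInt_ext_R _ (fun u => cos ((freq k - freq i) * u) - cos ((freq k + freq i) * u))).
  2:{ intros x _. rewrite !psi_S.
      replace ((freq k - freq i) * x) with (freq k * x - freq i * x) by ring.
      replace ((freq k + freq i) * x) with (freq k * x + freq i * x) by ring.
      rewrite cos_minus, cos_plus.
      replace (sqrt 2 * sin (freq k * x) * (sqrt 2 * sin (freq i * x)))
        with (sqrt 2 * sqrt 2 * (sin (freq k * x) * sin (freq i * x))) by ring.
      rewrite sqrt_sqrt by lra. ring. }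
  rewrite RInt_Rminus by (apply ex_RInt_continuous_R; intros;
                          apply ex_derive_continuous_R; auto_derive; auto).
  rewrite (RInt_cos_mult (freq k + freq i)) by
    (lra || (unfold freq; rewrite <- Rmult_plus_distr_r, <- plus_INR; apply sin_INR_mult_PI)).
  destruct (Nat.eq_dec k i) as [<- | Hki].
  - rewrite (RInt_ext_R _ (fun _ => 1)) by (intros; rewrite Rminus_diag, Rmult_0_l, cos_0; auto).
    rewrite RInt_const. change (scal (1 - 0) 1) with ((1 - 0) * 1). ring.
  - rewrite RInt_cos_mult; [ring | |].
    + unfold freq. intro Heq. apply Hki, INR_eq.
      rewrite !S_INR in Heq. pose proof PI_RGT_0. nra.
    + unfold freq. rewrite <- Rmult_minus_distr_r, Rmult_minus_distr_r, sin_minus, !sin_INR_mult_PI. ring.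
Qed.

Lemma coef_sine_partial c N i :
  coef (sine_partial c 0 N) (S i) = if le_dec i N then c i else 0.
Proof.
  assert (Hterm : forall k, (RInt (fun u => sine_term c 0 k u * psi (S i) u) 0 1 : R)
                           = c k * (if Nat.eq_dec k i then 1 else 0)).
  { intros k. rewrite <- RInt_psi_psi, <- RInt_Rscal.
    - apply RInt_ext_R. intros; rewrite sine_term_0; ring.
    - apply ex_RInt_continuous_R. intros; apply continuous_Rmult; apply continuous_psi. }
  unfold coef, sine_partial. induction N.
  - rewrite (RInt_ext_R _ (fun u => sine_term c 0 0 u * psi (S i) u))
      by (intros; rewrite sum_O; auto).
    rewrite Hterm. destruct (Nat.eq_dec 0 i), (le_dec i 0); try lia; subst; ring.
  - rewrite (RInt_ext_R _ (fun u => sum_n (fun k => sine_term c 0 k u) N * psi (S i) u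
                                   + sine_term c 0 (S N) u * psi (S i) u))
      by (intros; rewrite sum_Sn; unfold plus; simpl; ring).
    rewrite RInt_Rplus, IHN, Hterm.
    + destruct (Nat.eq_dec (S N) i), (le_dec i N), (le_dec i (S N)); try lia; subst; ring.
    + apply ex_RInt_continuous_R; intros;
        apply continuous_Rmult; [apply continuous_sine_partial | apply continuous_psi].
    + apply ex_RInt_continuous_R; intros;
        apply continuous_Rmult; [apply continuous_sine_term | apply continuous_psi].
Qed.

Lemma coef_sine_series c i : ex_series (fun k => Rabs (c k) * freq k ^ 3) ->
  coef (sine_series c 0) (S i) = c i.
Proof.
  intros Hc. apply Rminus_diag_uniq.
  apply (eq_0_of_Rabs_le_is_lim_seq_0 _
           (fun N => sqrt 2 * (Series (sine_majorant c 0) - sum_n (sine_majorant c 0) N))).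
  - exists i. intros N HN.
    pose proof (coef_sine_partial c N i) as E. destruct (le_dec i N) as [_ | ]; [| lia].
    rewrite <- E. unfold coef. rewrite <- RInt_Rminus.
    2,3: apply ex_RInt_continuous_R; intros; apply continuous_Rmult;
      auto using continuous_psi, continuous_sine_partial, continuous_sine_series.
    eapply Rle_trans; [apply abs_RInt_le_const with
      (M := sqrt 2 * (Series (sine_majorant c 0) - sum_n (sine_majorant c 0) N)); [lra| |] | right; ring].
    + apply ex_RInt_continuous_R; intros; apply continuous_Rminus; apply continuous_Rmult;
        auto using continuous_psi, continuous_sine_partial, continuous_sine_series.
    + intros t _. rewrite <- Rmult_minus_distr_r, Rabs_mult, Rmult_comm.
      apply Rmult_le_compat; try apply Rabs_pos.
      * rewrite psi_S, Rabs_mult, Rabs_right by (apply Rle_ge, sqrt_pos).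
        rewrite <- (Rmult_1_r (sqrt 2)) at 2.
        apply Rmult_le_compat_l; [apply sqrt_pos | apply Rabs_le, SIN_bound].
      * apply Rabs_sine_series_minus_partial; auto.
  - apply is_lim_seq_scal_l_0, is_lim_seq_Series_minus_sum_n, ex_series_sine_majorant; auto.
Qed.

(** * Bernstein polynomials *)

Lemma sum_f_R0_scal_l a f n : sum_f_R0 (fun k => a * f k) n = a * sum_f_R0 f n.
Proof. rewrite scal_sum. apply sum_eq. intros; ring. Qed.

(* Pascal's rule for [C(n,k) y^k (1-y)^(n-k)]. *)
Fixpoint bernstein_basis (n k : nat) (y : R) : R :=
  match n, k with
  | 0%nat, 0%nat => 1
  | 0%nat, S _ => 0
  | S n', 0%nat => (1 - y) * bernstein_basis n' 0 y
  | S n', S k' => (1 - y) * bernstein_basis n' (S k') y + y * bernstein_basis n' k' y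
  end.

Definition bernstein (h : R -> R) (n : nat) (y : R) : R :=
  sum_f_R0 (fun k => h (INR k / INR n) * bernstein_basis n k y) n.

Lemma bernstein_basis_ge0 n k y : 0 <= y <= 1 -> 0 <= bernstein_basis n k y.
Proof.
  intros Hy. revert k. induction n; intros [|k]; simpl; try lra.
  - apply Rmult_le_pos; [lra | auto].
  - apply Rplus_le_le_0_compat; apply Rmult_le_pos; auto; lra.
Qed.

Lemma bernstein_basis_gt n k y : (n < k)%nat -> bernstein_basis n k y = 0.
Proof.
  revert k. induction n; intros [|k] Hk; simpl; try lia; auto.
  rewrite !IHn by lia. ring.
Qed.

Lemma sum_bernstein_basis_S g n y :
  sum_f_R0 (fun k => g k * bernstein_basis (S n) k y) (S n) =
  sum_f_R0 (fun k => ((1 - y) * g k + y * g (S k)) * bernstein_basis n k y) n.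
Proof.
  rewrite decomp_sum by lia. simpl pred.
  rewrite (sum_eq _ (fun k => (1 - y) * (g (S k) * bernstein_basis n (S k) y)
                             + y * (g (S k) * bernstein_basis n k y))) by (intros; simpl; ring).
  rewrite (sum_eq (fun k => ((1 - y) * g k + y * g (S k)) * bernstein_basis n k y)
             (fun k => (1 - y) * (g k * bernstein_basis n k y) + y * (g (S k) * bernstein_basis n k y)))
    by (intros; ring).
  rewrite !plus_sum, !sum_f_R0_scal_l.
  assert (Hshift : sum_f_R0 (fun k => g k * bernstein_basis n k y) n
                   = g 0%nat * bernstein_basis n 0 y
                     + sum_f_R0 (fun k => g (S k) * bernstein_basis n (S k) y) n).
  { transitivity (sum_f_R0 (fun k => g k * bernstein_basis n k y) (S n)).
    - rewrite tech5, bernstein_basis_gt by lia. ring.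
    - rewrite decomp_sum by lia. reflexivity. }
  rewrite Hshift. simpl bernstein_basis. ring.
Qed.

Lemma sum_bernstein_basis n y : sum_f_R0 (fun k => bernstein_basis n k y) n = 1.
Proof.
  induction n; [reflexivity|].
  rewrite (sum_eq _ (fun k => 1 * bernstein_basis (S n) k y)) by (intros; ring).
  rewrite sum_bernstein_basis_S.
  rewrite (sum_eq _ (fun k => bernstein_basis n k y)) by (intros; ring). exact IHn.
Qed.

Lemma sum_bernstein_basis_mult n y :
  sum_f_R0 (fun k => INR k * bernstein_basis n k y) n = INR n * y.
Proof.
  induction n; [simpl; ring|].
  rewrite sum_bernstein_basis_S.
  rewrite (sum_eq _ (fun k => INR k * bernstein_basis n k y + y * bernstein_basis n k y))
    by (intros; rewrite S_INR; ring).
  rewrite plus_sum, sum_f_R0_scal_l, IHn, sum_bernstein_basis, S_INR. ring.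
Qed.

Lemma sum_bernstein_basis_mult_sq n y :
  sum_f_R0 (fun k => INR k ^ 2 * bernstein_basis n k y) n = INR n ^ 2 * y ^ 2 + INR n * y * (1 - y).
Proof.
  induction n; [simpl; ring|].
  rewrite sum_bernstein_basis_S.
  rewrite (sum_eq _ (fun k => INR k ^ 2 * bernstein_basis n k y
                             + (2 * y) * (INR k * bernstein_basis n k y) + y * bernstein_basis n k y))
    by (intros; rewrite S_INR; ring).
  rewrite !plus_sum, !sum_f_R0_scal_l, IHn, sum_bernstein_basis_mult, sum_bernstein_basis, S_INR.
  ring.
Qed.

Lemma sum_bernstein_basis_variance n y : (0 < n)%nat ->
  sum_f_R0 (fun k => (INR k / INR n - y) ^ 2 * bernstein_basis n k y) n = y * (1 - y) / INR n.
Proof.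
  intros Hn. assert (0 < INR n) by (apply lt_0_INR; auto).
  rewrite (sum_eq _ (fun k => / INR n ^ 2 * (INR k ^ 2 * bernstein_basis n k y)
                             + (- 2 * y / INR n) * (INR k * bernstein_basis n k y)
                             + y ^ 2 * bernstein_basis n k y)) by (intros; field; lra).
  rewrite !plus_sum, !sum_f_R0_scal_l, sum_bernstein_basis_mult_sq, sum_bernstein_basis_mult,
    sum_bernstein_basis.
  field. lra.
Qed.

(* Far from [y] the oscillation [2 M] is dominated by the quadratic term. *)
Lemma Rabs_sub_le_modulus_sq (h : R -> R) M eps delta z y :
  0 <= eps -> 0 < delta -> 0 <= z <= 1 -> 0 <= y <= 1 ->
  (forall t, 0 <= t <= 1 -> Rabs (h t) <= M) ->
  (Rabs (z - y) < delta -> Rabs (h z - h y) <= eps) ->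
  Rabs (h z - h y) <= eps + 2 * M / delta ^ 2 * (z - y) ^ 2.
Proof.
  intros Heps Hd Hz Hy HM Hmod.
  assert (Hd2 : 0 < delta ^ 2) by (apply pow_lt; lra).
  assert (HM0 : 0 <= M) by (specialize (HM y Hy); pose proof (Rabs_pos (h y)); lra).
  assert (Hq : 0 <= 2 * M / delta ^ 2 * (z - y) ^ 2)
    by (apply Rmult_le_pos; [apply Rmult_le_pos; [lra | left; apply Rinv_0_lt_compat; lra]
                            | apply pow2_ge_0]).
  destruct (Rlt_dec (Rabs (z - y)) delta) as [Hclose | Hfar].
  - specialize (Hmod Hclose). lra.
  - apply Rnot_lt_le in Hfar.
    assert (delta ^ 2 <= (z - y) ^ 2) by (rewrite <- (pow2_abs (z - y)); apply pow_incr; lra).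
    assert (2 * M <= 2 * M / delta ^ 2 * (z - y) ^ 2).
    { replace (2 * M) with (2 * M / delta ^ 2 * delta ^ 2) at 1 by (field; lra).
      apply Rmult_le_compat_l; auto.
      apply Rmult_le_pos; [lra | left; apply Rinv_0_lt_compat; lra]. }
    pose proof (HM z Hz). pose proof (HM y Hy).
    pose proof (Rabs_triang (h z) (- h y)) as Htr. rewrite Rabs_Ropp in Htr.
    unfold Rminus. lra.
Qed.

Lemma Rabs_bernstein_minus_le (h : R -> R) M eps delta n y :
  (0 < n)%nat -> 0 <= eps -> 0 < delta -> 0 <= y <= 1 ->
  (forall t, 0 <= t <= 1 -> Rabs (h t) <= M) ->
  (forall z, 0 <= z <= 1 -> Rabs (z - y) < delta -> Rabs (h z - h y) <= eps) ->
  Rabs (bernstein h n y - h y) <= eps + 2 * M / (delta ^ 2 * INR n).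
Proof.
  intros Hn Heps Hd Hy HM Hmod.
  assert (Hn0 : 0 < INR n) by (apply lt_0_INR; auto).
  assert (HM0 : 0 <= M) by (specialize (HM y Hy); pose proof (Rabs_pos (h y)); lra).
  assert (HB : forall k, 0 <= bernstein_basis n k y) by (intros; apply bernstein_basis_ge0; auto).
  replace (bernstein h n y - h y)
    with (sum_f_R0 (fun k => (h (INR k / INR n) - h y) * bernstein_basis n k y) n).
  2:{ unfold bernstein. rewrite <- (Rmult_1_r (h y)) at 1.
      rewrite <- (sum_bernstein_basis n y), <- sum_f_R0_scal_l, <- minus_sum.
      apply sum_eq; intros; ring. }
  eapply Rle_trans; [apply Rsum_abs|].
  eapply Rle_trans; [apply sum_Rle with (Bn := fun k => eps * bernstein_basis n k y
      + 2 * M / delta ^ 2 * ((INR k / INR n - y) ^ 2 * bernstein_basis n k y))|].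
  - intros k Hk. rewrite Rabs_mult, (Rabs_right (bernstein_basis n k y)) by (apply Rle_ge; auto).
    rewrite <- Rmult_assoc, <- Rmult_plus_distr_r.
    apply Rmult_le_compat_r; auto.
    apply Rabs_sub_le_modulus_sq; auto using INR_div_INR_bounds.
  - rewrite plus_sum, !sum_f_R0_scal_l, sum_bernstein_basis, sum_bernstein_basis_variance by auto.
    assert (0 <= y * (1 - y) <= 1) by nra.
    assert (Hd2 : 0 < delta ^ 2) by (apply pow_lt; lra).
    replace (2 * M / delta ^ 2 * (y * (1 - y) / INR n))
      with (2 * M / (delta ^ 2 * INR n) * (y * (1 - y))) by (field; lra).
    assert (0 <= 2 * M / (delta ^ 2 * INR n))
      by (apply Rmult_le_pos; [lra | left; apply Rinv_0_lt_compat, Rmult_lt_0_compat; lra]).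
    nra.
Qed.

Lemma bernstein_approx (h : R -> R) M :
  (forall y, 0 <= y <= 1 -> Rabs (h y) <= M) ->
  (forall eps, 0 < eps -> exists delta, 0 < delta /\ forall y1 y2, 0 <= y1 <= 1 -> 0 <= y2 <= 1 ->
     Rabs (y1 - y2) < delta -> Rabs (h y1 - h y2) <= eps) ->
  forall eps, 0 < eps -> exists n, forall y, 0 <= y <= 1 -> Rabs (bernstein h n y - h y) <= 2 * eps.
Proof.
  intros HM Hunif eps Heps.
  destruct (Hunif eps Heps) as [delta [Hd Hmod]].
  assert (HM0 : 0 <= M) by (specialize (HM 0 ltac:(lra)); pose proof (Rabs_pos (h 0)); lra).
  assert (Hd2 : 0 < delta ^ 2 * eps) by (apply Rmult_lt_0_compat; [apply pow_lt|]; lra).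
  destruct (INR_unbounded (2 * M / (delta ^ 2 * eps))) as [n Hn].
  assert (Hn0 : 0 < INR n).
  { eapply Rle_lt_trans; [| exact Hn]. apply Rmult_le_pos; [lra | left; apply Rinv_0_lt_compat; lra]. }
  exists n. intros y Hy.
  eapply Rle_trans; [apply (Rabs_bernstein_minus_le h M eps delta n y); auto; try lra|].
  - apply INR_lt. simpl. lra.
  - assert (2 * M / (delta ^ 2 * INR n) <= eps); [|lra].
    apply (Rmult_le_reg_r (delta ^ 2 * INR n)); [apply Rmult_lt_0_compat; [apply pow_lt|]; lra|].
    apply (Rmult_lt_compat_r (delta ^ 2 * eps)) in Hn; [|lra].
    unfold Rdiv in *. rewrite Rmult_assoc, Rinv_l in Hn by lra.
    replace (2 * M * / (delta ^ 2 * INR n) * (delta ^ 2 * INR n)) with (2 * M) by (field; lra).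
    nra.
Qed.

(** * Completeness of the Dirichlet sine system *)

Lemma sin_ge_third s : 0 <= s <= 2 -> s / 3 <= sin s.
Proof.
  intros Hs. pose proof PI2_3_2. pose proof PI_4.
  destruct (SIN s) as [HS _]; try lra.
  eapply Rle_trans; [| exact HS]. unfold sin_lb, sin_approx, sin_term. simpl.
  assert (0 <= s ^ 2 <= 4) by nra.
  assert (0 <= s ^ 5 * (42 - s ^ 2)) by (apply Rmult_le_pos; [apply pow_le; lra | nra]).
  assert (s * (1 - s ^ 2 / 6) >= s / 3) by nra.
  simpl in *. field_simplify. nra.
Qed.

Lemma cos_sub_cos_ge u v : 0 <= v <= u -> u <= PI -> (u - v) ^ 2 / 18 <= cos v - cos u.
Proof.
  intros Hv Hu. pose proof PI2_3_2. pose proof PI_4.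
  set (m := (u + v) / 2). set (s := (u - v) / 2).
  replace ((u - v) ^ 2 / 18) with (2 * (s / 3 * (s / 3))) by (unfold s; field).
  replace v with (m - s) by (unfold m, s; field).
  replace u with (m + s) by (unfold m, s; field).
  rewrite cos_minus, cos_plus.
  replace (cos m * cos s + sin m * sin s - (cos m * cos s - sin m * sin s))
    with (2 * (sin m * sin s)) by ring.
  assert (Hs : 0 <= s <= PI / 2) by (unfold s; lra).
  assert (Hsm : sin s <= sin m).
  { destruct (Rle_dec m (PI / 2)).
    - apply sin_incr_1; unfold m, s in *; lra.
    - rewrite <- (sin_PI_x m). apply sin_incr_1; unfold m, s in *; lra. }
  assert (Hs3 : s / 3 <= sin s) by (apply sin_ge_third; lra).
  assert (s / 3 * (s / 3) <= sin s * sin s) by (apply Rmult_le_compat; lra).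
  assert (sin s * sin s <= sin m * sin s) by (apply Rmult_le_compat_r; lra).
  lra.
Qed.

(* [hav u = sin (PI u / 2) ^ 2]; polynomials in [hav] are polynomials in [cos (PI u)]. *)
Definition hav (u : R) : R := (1 - cos (PI * u)) / 2.
Definition ahav (y : R) : R := acos (1 - 2 * y) / PI.

Lemma hav_bounds u : 0 <= hav u <= 1.
Proof. unfold hav. pose proof (COS_bound (PI * u)). lra. Qed.

Lemma ahav_bounds y : 0 <= ahav y <= 1.
Proof.
  unfold ahav. pose proof (acos_bound (1 - 2 * y)). pose proof PI_RGT_0.
  split; [apply Rmult_le_pos; [lra | left; apply Rinv_0_lt_compat; lra]|].
  apply (Rmult_le_reg_r PI); auto. unfold Rdiv. rewrite Rmult_assoc, Rinv_l; lra.
Qed.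

Lemma hav_ahav y : 0 <= y <= 1 -> hav (ahav y) = y.
Proof.
  intros Hy. unfold hav, ahav. pose proof PI_RGT_0.
  replace (PI * (acos (1 - 2 * y) / PI)) with (acos (1 - 2 * y)) by (field; lra).
  rewrite cos_acos by lra. field.
Qed.

Lemma ahav_hav u : 0 <= u <= 1 -> ahav (hav u) = u.
Proof.
  intros Hu. unfold hav, ahav. pose proof PI_RGT_0.
  replace (1 - 2 * ((1 - cos (PI * u)) / 2)) with (cos (PI * u)) by field.
  rewrite acos_cos; [field; lra | split; nra].
Qed.

Lemma sq_sub_le_Rabs_hav_sub u v : 0 <= u <= 1 -> 0 <= v <= 1 ->
  (u - v) ^ 2 <= 36 * Rabs (hav u - hav v).
Proof.
  revert u v.
  assert (Hle : forall u v, 0 <= u <= 1 -> 0 <= v <= 1 -> v <= u ->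
                 (u - v) ^ 2 <= 36 * Rabs (hav u - hav v)).
  { intros u v Hu Hv Hvu. pose proof PI2_3_2.
    pose proof (cos_sub_cos_ge (PI * u) (PI * v) ltac:(split; nra) ltac:(nra)) as Hcos.
    replace (PI * u - PI * v) with (PI * (u - v)) in Hcos by ring.
    rewrite Rpow_mult_distr in Hcos.
    assert (1 <= PI ^ 2) by nra.
    assert (0 <= (u - v) ^ 2) by apply pow2_ge_0.
    unfold hav. rewrite Rabs_right by nra. nra. }
  intros u v Hu Hv. destruct (Rle_dec v u); [apply Hle; auto|].
  replace ((u - v) ^ 2) with ((v - u) ^ 2) by ring. rewrite Rabs_minus_sym.
  apply Hle; auto; lra.
Qed.

Lemma sq_ahav_sub_le y z : 0 <= y <= 1 -> 0 <= z <= 1 ->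
  (ahav y - ahav z) ^ 2 <= 36 * Rabs (y - z).
Proof.
  intros Hy Hz. pose proof (sq_sub_le_Rabs_hav_sub _ _ (ahav_bounds y) (ahav_bounds z)) as H.
  rewrite !hav_ahav in H; auto.
Qed.

Lemma uniform_continuity_comp_ahav (phi : R -> R) : (forall x, continuous phi x) ->
  forall eps, 0 < eps -> exists delta, 0 < delta /\ forall y z, 0 <= y <= 1 -> 0 <= z <= 1 ->
    Rabs (y - z) < delta -> Rabs (phi (ahav y) - phi (ahav z)) <= eps.
Proof.
  intros Hphi eps Heps.
  destruct (Heine phi (fun c => 0 <= c <= 1) (compact_P3 0 1)
              (fun x _ => proj2 (continuity_pt_filterlim _ _) (Hphi x)) (mkposreal _ Heps))
    as [d Hd].
  pose proof (cond_pos d).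
  exists ((d / 6) ^ 2). split; [apply pow_lt; lra|].
  intros y z Hy Hz Hyz. left. apply Hd; try apply ahav_bounds.
  destruct (Rlt_dec (Rabs (ahav y - ahav z)) d) as [| Hfar]; auto. exfalso.
  apply Rnot_lt_le in Hfar.
  assert (d ^ 2 <= (ahav y - ahav z) ^ 2)
    by (rewrite <- (pow2_abs (ahav y - ahav z)); apply pow_incr; lra).
  pose proof (sq_ahav_sub_le y z Hy Hz).
  replace ((d / 6) ^ 2) with (d ^ 2 / 36) in Hyz by field. lra.
Qed.

Lemma psi_S_mult_cos n u : psi (S n) u * cos (PI * u) = / 2 * psi (S (S n)) u + / 2 * psi n u.
Proof.
  unfold psi. rewrite !S_INR.
  replace ((INR n + 1 + 1) * PI * u) with ((INR n + 1) * PI * u + PI * u) by ring.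
  replace (INR n * PI * u) with ((INR n + 1) * PI * u - PI * u) by ring.
  rewrite sin_plus, sin_minus. field.
Qed.

Section Annihilator.

Variable D : R -> R.
Hypothesis HDc : forall x, continuous D x.
Hypothesis HD0 : forall n, coef D (S n) = 0.

Definition annihilated (q : R -> R) : Prop :=
  (forall x, continuous q x) /\ forall n, (RInt (fun u => D u * psi (S n) u * q u) 0 1 : R) = 0.

Lemma annihilated_ext q1 q2 : (forall u, q1 u = q2 u) -> annihilated q1 -> annihilated q2.
Proof.
  intros E [Hc Hi]. split.
  - intros x. eapply continuous_ext; [exact E | apply Hc].
  - intros n. rewrite <- (Hi n) at 2. apply RInt_ext_R. intros; rewrite E; auto.
Qed.

Lemma annihilated_1 : annihilated (fun _ => 1).
Proof.
  split; [intros; apply continuous_Rconst|].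
  intros n. rewrite <- (HD0 n) at 2. apply RInt_ext_R. intros; ring.
Qed.

Lemma continuous_D_psi_mult n q x : (forall x, continuous q x) ->
  continuous (fun u => D u * psi n u * q u) x.
Proof. intros Hq. apply continuous_Rmult; auto. apply continuous_Rmult; auto using continuous_psi. Qed.

Ltac ex_RInt_D_psi :=
  apply ex_RInt_continuous_R; intros;
  first [apply continuous_D_psi_mult | apply continuous_Rscal, continuous_D_psi_mult]; assumption.

Lemma annihilated_lin a b q1 q2 :
  annihilated q1 -> annihilated q2 -> annihilated (fun u => a * q1 u + b * q2 u).
Proof.
  intros [Hc1 Hi1] [Hc2 Hi2]. split.
  - intros x. apply continuous_Rplus; apply continuous_Rscal; auto.
  - intros n.
    rewrite (RInt_ext_R _ (fun u => a * (D u * psi (S n) u * q1 u) + b * (D u * psi (S n) u * q2 u)))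
      by (intros; ring).
    rewrite RInt_Rplus, !RInt_Rscal, Hi1, Hi2 by ex_RInt_D_psi.
    ring.
Qed.

Lemma annihilated_mult_cos q : annihilated q -> annihilated (fun u => q u * cos (PI * u)).
Proof.
  intros [Hc Hi]. split.
  - intros x. apply continuous_Rmult; auto. apply ex_derive_continuous_R. auto_derive; auto.
  - intros n.
    rewrite (RInt_ext_R _ (fun u => / 2 * (D u * psi (S (S n)) u * q u) + / 2 * (D u * psi n u * q u))).
    2:{ intros x _. rewrite <- Rmult_plus_distr_l.
        transitivity (D x * q x * (psi (S n) x * cos (PI * x))); [ring|].
        rewrite psi_S_mult_cos. ring. }
    rewrite RInt_Rplus, !RInt_Rscal, Hi by ex_RInt_D_psi.
    destruct n as [| m].
    + rewrite (RInt_ext_R _ (fun _ => 0)) by (intros; rewrite psi_0; ring).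
      rewrite RInt_const. change (scal (1 - 0) 0) with ((1 - 0) * 0). ring.
    + rewrite Hi. ring.
Qed.

Lemma annihilated_mult_hav q : annihilated q -> annihilated (fun u => q u * hav u).
Proof.
  intros H. apply (annihilated_ext (fun u => / 2 * q u + (- / 2) * (q u * cos (PI * u)))).
  - intros; unfold hav; field.
  - apply annihilated_lin; auto using annihilated_mult_cos.
Qed.

Lemma annihilated_mult_1_sub_hav q : annihilated q -> annihilated (fun u => q u * (1 - hav u)).
Proof.
  intros H. apply (annihilated_ext (fun u => / 2 * q u + / 2 * (q u * cos (PI * u)))).
  - intros; unfold hav; field.
  - apply annihilated_lin; auto using annihilated_mult_cos.
Qed.

Lemma annihilated_bernstein_basis n k : annihilated (fun u => bernstein_basis n k (hav u)).
Proof.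
  revert k. induction n as [| n IHn]; intros [| k]; simpl.
  - apply annihilated_1.
  - apply (annihilated_ext (fun u => 0 * 1 + 0 * 1)); [intros; ring|].
    apply annihilated_lin; apply annihilated_1.
  - apply (annihilated_ext (fun u => bernstein_basis n 0 (hav u) * (1 - hav u))); [intros; ring|].
    apply annihilated_mult_1_sub_hav, IHn.
  - apply (annihilated_ext (fun u => 1 * (bernstein_basis n (S k) (hav u) * (1 - hav u))
                                    + 1 * (bernstein_basis n k (hav u) * hav u))); [intros; ring|].
    apply annihilated_lin; [apply annihilated_mult_1_sub_hav | apply annihilated_mult_hav]; apply IHn.
Qed.

Lemma annihilated_bernstein h n : annihilated (fun u => bernstein h n (hav u)).
Proof.
  unfold bernstein.
  assert (Hpartial : forall m,
    annihilated (fun u => sum_f_R0 (fun k => h (INR k / INR n) * bernstein_basis n k (hav u)) m)).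
  { induction m as [| m IHm].
    - apply (annihilated_ext (fun u => h (INR 0 / INR n) * bernstein_basis n 0 (hav u) + 0 * 1));
        [intros; cbn [sum_f_R0]; ring|].
      apply annihilated_lin; [apply annihilated_bernstein_basis | apply annihilated_1].
    - eapply annihilated_ext;
        [| apply (annihilated_lin 1 (h (INR (S m) / INR n)) _ _ IHm (annihilated_bernstein_basis n (S m)))].
      intros; cbn [sum_f_R0]; ring. }
  apply Hpartial.
Qed.

End Annihilator.

Lemma RInt_le_0_nonneg_eq_0 (f : R -> R) : (forall x, continuous f x) ->
  (forall x, 0 <= x <= 1 -> 0 <= f x) -> RInt f 0 1 <= 0 -> forall x, 0 <= x <= 1 -> f x = 0.
Proof.
  intros Hc Hp Hi x0 Hx0.
  destruct (Req_dec (f x0) 0) as [| Hne]; auto. exfalso.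
  assert (Hpos : 0 < f x0) by (specialize (Hp x0 Hx0); lra).
  destruct (proj1 (filterlim_locally f (f x0)) (Hc x0) (mkposreal _ (Rlt_gt _ _ Hpos)))
    as [d Hd].
  pose proof (cond_pos d).
  set (a := Rmax 0 (x0 - d / 2)). set (b := Rmin 1 (x0 + d / 2)).
  assert (Ha : 0 <= a <= x0 /\ x0 - d / 2 <= a) by (unfold a; apply Rmax_case_strong; lra).
  assert (Hb : x0 <= b <= 1 /\ b <= x0 + d / 2) by (unfold b; apply Rmin_case_strong; lra).
  assert (Hab : a < b) by (unfold a, b; apply Rmax_case_strong; apply Rmin_case_strong; lra).
  assert (Hex : forall u v, ex_RInt f u v) by (intros; apply ex_RInt_continuous_R; auto).
  assert (Hsplit : RInt f 0 1 = RInt f 0 a + RInt f a b + RInt f b 1).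
  { assert (E1 := RInt_Chasles (V := R_CompleteNormedModule) f 0 a b (Hex _ _) (Hex _ _)).
    assert (E2 := RInt_Chasles (V := R_CompleteNormedModule) f 0 b 1 (Hex _ _) (Hex _ _)).
    change (RInt f 0 a + RInt f a b = RInt f 0 b) in E1.
    change (RInt f 0 b + RInt f b 1 = RInt f 0 1) in E2.
    lra. }
  assert (0 <= RInt f 0 a) by (apply RInt_ge_0; auto; [lra | intros; apply Hp; lra]).
  assert (0 <= RInt f b 1) by (apply RInt_ge_0; auto; [lra | intros; apply Hp; lra]).
  assert (0 < RInt f a b).
  { apply RInt_gt_0; auto. intros x Hx.
    assert (Hclose : Rabs (x - x0) < d) by (apply Rabs_def1; lra).
    specialize (Hd x Hclose). apply Rabs_def2 in Hd. unfold minus, plus, opp in Hd; simpl in Hd. lra. }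
  lra.
Qed.

Lemma eq_0_at_endpoints (D : R -> R) : continuous D 0 -> continuous D 1 ->
  (forall x, 0 < x < 1 -> D x = 0) -> D 0 = 0 /\ D 1 = 0.
Proof.
  intros H0 H1 Hin.
  assert (Hlim : forall l u, continuous D l -> is_lim_seq u l -> (forall n, 0 < u n < 1) -> D l = 0).
  { intros l u Hl Hu Hu01.
    assert (H := is_lim_seq_continuous D u l (proj2 (continuity_pt_filterlim _ _) Hl) Hu).
    assert (H' : is_lim_seq (fun _ => 0) (D l))
      by (eapply is_lim_seq_ext; [| exact H]; intros; apply Hin; auto).
    apply is_lim_seq_unique in H'. rewrite Lim_seq_const in H'. now injection H'. }
  split.
  - apply (Hlim 0 _ H0 is_lim_seq_inv_INR_plus_2 inv_INR_plus_2_bounds).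
  - apply (Hlim 1 _ H1 is_lim_seq_1_minus_inv_INR_plus_2).
    intros n. pose proof (inv_INR_plus_2_bounds n). lra.
Qed.

Lemma RInt_sq_le_0_of_orthogonal_polynomials (phi : R -> R) : (forall x, continuous phi x) ->
  (forall n x, continuous (fun u => bernstein (fun y => phi (ahav y)) n (hav u)) x) ->
  (forall n, RInt (fun u => phi u * bernstein (fun y => phi (ahav y)) n (hav u)) 0 1 = 0) ->
  RInt (fun u => phi u * phi u) 0 1 <= 0.
Proof.
  intros Hc HBc Hortho.
  destruct (continuity_ab_maj (fun u => Rabs (phi u)) 0 1 ltac:(lra)) as [xM [HM _]].
  { intros c _. apply continuity_pt_filterlim, continuous_Rabs_comp, Hc. }
  set (M := Rabs (phi xM)). pose proof (Rabs_pos (phi xM)) as HM0. fold M in HM0.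
  set (h := fun y => phi (ahav y)).
  assert (Hhb : forall y, 0 <= y <= 1 -> Rabs (h y) <= M) by (intros; apply HM, ahav_bounds).
  apply le_epsilon. intros eps Heps. rewrite Rplus_0_l.
  set (e := eps / (2 * (M + 1))).
  assert (He : 0 < e) by (apply Rdiv_lt_0_compat; lra).
  destruct (bernstein_approx h M Hhb (uniform_continuity_comp_ahav phi Hc) e He) as [n Hn].
  assert (Hex : forall g : R -> R, (forall x, continuous g x) -> ex_RInt g 0 1)
    by (intros; apply ex_RInt_continuous_R; auto).
  replace (RInt (fun u => phi u * phi u) 0 1) with
    (RInt (fun u => phi u * phi u) 0 1 - RInt (fun u => phi u * bernstein h n (hav u)) 0 1)
    by (unfold h; rewrite Hortho; ring).
  rewrite <- RInt_Rminus by (apply Hex; intros; apply continuous_Rmult; auto).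
  rewrite (RInt_ext_R _ (fun u => phi u * (phi u - bernstein h n (hav u)))) by (intros; ring).
  eapply Rle_trans; [apply Rle_abs|].
  eapply Rle_trans; [apply abs_RInt_le_const with (M := M * (2 * e)); [lra | |] |].
  - apply Hex. intros. apply continuous_Rmult, continuous_Rminus; auto.
  - intros t Ht. rewrite Rabs_mult. apply Rmult_le_compat; try apply Rabs_pos; [apply HM; auto|].
    replace (phi t) with (h (hav t)) by (unfold h; rewrite ahav_hav; auto).
    rewrite Rabs_minus_sym. apply Hn, hav_bounds.
  - unfold e. apply Rminus_le_0.
    replace (eps - (1 - 0) * (M * (2 * (eps / (2 * (M + 1))))))
      with (eps / (M + 1)) by (field; lra).
    apply Rlt_le, Rdiv_lt_0_compat; lra.
Qed.

Lemma psi_1_pos u : 0 < u < 1 -> 0 < psi 1 u.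
Proof.
  intros Hu. unfold psi. pose proof PI_RGT_0.
  apply Rmult_lt_0_compat; [apply sqrt_lt_R0; lra|].
  apply sin_gt_0; simpl; nra.
Qed.

(* [D sin (PI u)] is orthogonal to every polynomial in [cos (PI u)] by the product-to-sum
   formulas, and these polynomials are uniformly dense by Bernstein's theorem. *)
Theorem coef_eq_0_eq_0 (D : R -> R) : (forall x, continuous D x) ->
  (forall n, coef D (S n) = 0) -> forall x, 0 <= x <= 1 -> D x = 0.
Proof.
  intros HDc HD0.
  set (phi := fun u => D u * psi 1 u).
  assert (Hphic : forall x, continuous phi x)
    by (intros; apply continuous_Rmult; auto using continuous_psi).
  assert (Hsq : RInt (fun u => phi u * phi u) 0 1 <= 0).
  { apply RInt_sq_le_0_of_orthogonal_polynomials; auto;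
      intros n; [apply (annihilated_bernstein D HDc HD0) | apply (annihilated_bernstein D HDc HD0 _ n)]. }
  assert (Hin : forall x, 0 < x < 1 -> D x = 0).
  { intros x Hx.
    assert (Hphi0 := RInt_le_0_nonneg_eq_0 (fun u => phi u * phi u)
      (fun x => continuous_Rmult _ _ x (Hphic x) (Hphic x)) (fun x _ => Rle_0_sqr (phi x)) Hsq x
      ltac:(lra)).
    apply Rsqr_eq_0, Rmult_integral in Hphi0. pose proof (psi_1_pos x Hx).
    destruct Hphi0; [auto | lra]. }
  destruct (eq_0_at_endpoints D (HDc 0) (HDc 1) Hin).
  intros x Hx. destruct (Req_dec x 0) as [-> | ]; auto. destruct (Req_dec x 1) as [-> | ]; auto.
  apply Hin; lra.
Qed.

(** * The test function as a sine series *)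

Definition clamp (x : R) : R := Rmin 1 (Rmax 0 x).

Lemma clamp_bounds x : 0 <= clamp x <= 1.
Proof. unfold clamp, Rmin, Rmax. repeat destruct Rle_dec; lra. Qed.

Lemma clamp_id x : 0 <= x <= 1 -> clamp x = x.
Proof. intros. unfold clamp, Rmin, Rmax. repeat destruct Rle_dec; lra. Qed.

Lemma Rabs_clamp_sub_le x y : Rabs (clamp y - clamp x) <= Rabs (y - x).
Proof.
  pose proof (Rle_abs (y - x)). pose proof (Rabs_maj2 (y - x)).
  apply Rabs_le. unfold clamp, Rmin, Rmax. repeat destruct Rle_dec; lra.
Qed.

Lemma continuous_comp_clamp (G : R -> R) x : cont_on_01 G -> continuous (fun u => G (clamp u)) x.
Proof.
  intros HG. apply continuity_pt_filterlim, continuity_pt_locally. intros eps.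
  destruct (HG (clamp x) (clamp_bounds x) eps (cond_pos eps)) as [d [Hd Hclose]].
  exists (mkposreal d Hd). intros y Hy. apply Hclose; [apply clamp_bounds|].
  eapply Rle_lt_trans; [apply Rabs_clamp_sub_le | exact Hy].
Qed.

Lemma coef_minus (f g : R -> R) n : (forall x, continuous f x) -> (forall x, continuous g x) ->
  coef (fun u => f u - g u) n = coef f n - coef g n.
Proof.
  intros Hf Hg. unfold coef. rewrite <- RInt_Rminus.
  - apply RInt_ext_R. intros; ring.
  - apply ex_RInt_continuous_R. intros; apply continuous_Rmult; auto using continuous_psi.
  - apply ex_RInt_continuous_R. intros; apply continuous_Rmult; auto using continuous_psi.
Qed.

Definition sine_coefs (G : R -> R) (k : nat) : R := coef G (S k).

Section TestFunction.

Variables (alpha : R) (G : R -> R).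
Hypothesis Halpha : 0 < alpha.
Hypothesis HGc : cont_on_01 G.
Hypothesis HGS : in_S alpha G.

Lemma sine_coefs_decay : ex_series (fun k => Rabs (sine_coefs G k) * freq k ^ 3).
Proof. apply (in_S_coef_decay alpha); auto. Qed.

Lemma eq_sine_series x : 0 <= x <= 1 -> G x = sine_series (sine_coefs G) 0 x.
Proof.
  intros Hx.
  set (F := sine_series (sine_coefs G) 0).
  assert (HFc : forall x, continuous F x)
    by (intros; apply continuous_sine_series; auto using sine_coefs_decay).
  assert (HD : G (clamp x) - F x = 0).
  { apply (coef_eq_0_eq_0 (fun u => G (clamp u) - F u)); auto.
    - intros; apply continuous_Rminus; auto using continuous_comp_clamp.
    - intros n. rewrite coef_minus by auto using continuous_comp_clamp.
      unfold F. rewrite coef_sine_series by apply sine_coefs_decay.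
      unfold sine_coefs, coef. apply Rminus_diag_eq, RInt_ext_R.
      intros u Hu. rewrite Rmin_left, Rmax_right in Hu by lra. rewrite clamp_id by lra. reflexivity. }
  rewrite clamp_id in HD by auto. lra.
Qed.

Lemma Derive_n_2_eq_sine_series u : 0 < u < 1 ->
  Derive_n G 2 u = sine_series (sine_coefs G) 2 u.
Proof.
  intros Hu.
  rewrite (Derive_n_ext_loc G (sine_series (sine_coefs G) 0)).
  - simpl. rewrite (Derive_ext _ (sine_series (sine_coefs G) 1)).
    + apply is_derive_unique, is_derive_sine_series; auto using sine_coefs_decay.
    + intros t. apply is_derive_unique, is_derive_sine_series; auto using sine_coefs_decay.
  - assert (Hr : 0 < Rmin u (1 - u)) by (apply Rmin_case; lra).
    exists (mkposreal _ Hr). intros y Hy. apply eq_sine_series.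
    change (Rabs (y - u) < Rmin u (1 - u)) in Hy.
    pose proof (Rmin_l u (1 - u)). pose proof (Rmin_r u (1 - u)).
    apply Rabs_def2 in Hy. lra.
Qed.

Lemma second_deriv01_eq_sine_series u : 0 <= u <= 1 ->
  second_deriv01 G u = sine_series (sine_coefs G) 2 u.
Proof.
  intros Hu.
  assert (Hlim : forall v (l : R), is_lim_seq v l -> (forall n, 0 < v n < 1) ->
                 real (Lim_seq (fun n => Derive_n G 2 (v n))) = sine_series (sine_coefs G) 2 l).
  { intros v l Hv Hv01.
    rewrite (Lim_seq_ext _ (fun n => sine_series (sine_coefs G) 2 (v n)))
      by (intros; apply Derive_n_2_eq_sine_series; auto).
    rewrite (is_lim_seq_unique _ (sine_series (sine_coefs G) 2 l)); [reflexivity|].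
    apply is_lim_seq_continuous; auto.
    apply continuity_pt_filterlim, continuous_sine_series; auto using sine_coefs_decay. }
  unfold second_deriv01.
  destruct (Rlt_dec 0 u) as [Hu0 | Hu0]; [destruct (Rlt_dec u 1) as [Hu1 | Hu1]|].
  - apply Derive_n_2_eq_sine_series; lra.
  - replace u with 1 by lra. apply Hlim; [apply is_lim_seq_1_minus_inv_INR_plus_2|].
    intros n. pose proof (inv_INR_plus_2_bounds n). lra.
  - replace u with 0 by lra. apply Hlim; [apply is_lim_seq_inv_INR_plus_2 | apply inv_INR_plus_2_bounds].
Qed.

End TestFunction.

(** * The discrete approximation *)

Lemma Rabs_sub_le_of_derive_bound (f df : R -> R) a b K : a <= b ->
  (forall t, a <= t <= b -> is_derive f t (df t)) ->
  (forall t, a <= t <= b -> Rabs (df t) <= K) ->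
  Rabs (f b - f a) <= K * (b - a).
Proof.
  intros Hab Hd Hb.
  destruct (MVT_gen f a b df) as [c [Hc E]].
  - intros x Hx. apply Hd. rewrite Rmin_left, Rmax_right in Hx by lra. lra.
  - intros x Hx. rewrite Rmin_left, Rmax_right in Hx by lra.
    apply continuity_pt_filterlim, ex_derive_continuous_R. eexists; apply Hd; lra.
  - rewrite Rmin_left, Rmax_right in Hc by lra.
    rewrite E, Rabs_mult, (Rabs_right (b - a)) by lra.
    apply Rmult_le_compat_r; [lra | apply Hb; lra].
Qed.

Lemma Rabs_le_of_second_derive_bound (f df ddf : R -> R) h K : 0 <= h ->
  f 0 = 0 -> df 0 = 0 ->
  (forall t, is_derive f t (df t)) -> (forall t, is_derive df t (ddf t)) ->
  (forall t, 0 <= t <= h -> Rabs (ddf t) <= K) -> Rabs (f h) <= K * h ^ 2.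
Proof.
  intros Hh Hf0 Hdf0 Hf Hdf Hddf.
  assert (HK : 0 <= K) by (specialize (Hddf 0 ltac:(lra)); pose proof (Rabs_pos (ddf 0)); lra).
  assert (Hd : forall t, 0 <= t <= h -> Rabs (df t) <= K * h).
  { intros t Ht.
    assert (H := Rabs_sub_le_of_derive_bound df ddf 0 t K ltac:(lra)
                   (fun s _ => Hdf s) ltac:(intros; apply Hddf; lra)).
    rewrite Hdf0, !Rminus_0_r in H.
    assert (K * t <= K * h) by (apply Rmult_le_compat_l; lra). lra. }
  assert (H := Rabs_sub_le_of_derive_bound f df 0 h (K * h) Hh (fun s _ => Hf s) Hd).
  rewrite Hf0, !Rminus_0_r in H. simpl. lra.
Qed.

Section CentralDifference.

Variables F F1 F2 F3 : R -> R.
Variable M3 : R.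
Hypothesis dF : forall t, is_derive F t (F1 t).
Hypothesis dF1 : forall t, is_derive F1 t (F2 t).
Hypothesis dF2 : forall t, is_derive F2 t (F3 t).
Hypothesis bF3 : forall t, Rabs (F3 t) <= M3.

Lemma central_difference_error x h : 0 <= h ->
  Rabs (F (x + h) - 2 * F x + F (x - h) - h ^ 2 * F2 x) <= 2 * M3 * h ^ 3.
Proof.
  intros Hh.
  set (phi2 := fun t => F2 (x + t) + F2 (x - t) - 2 * F2 x).
  assert (Hb2 : forall t, 0 <= t <= h -> Rabs (phi2 t) <= 2 * M3 * h).
  { intros t Ht.
    assert (Hr : Rabs (F2 (x + t) - F2 x) <= M3 * t).
    { replace t with (x + t - x) at 2 by ring.
      apply (Rabs_sub_le_of_derive_bound F2 F3); auto; lra. }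
    assert (Hl : Rabs (F2 x - F2 (x - t)) <= M3 * t).
    { replace t with (x - (x - t)) at 2 by ring.
      apply (Rabs_sub_le_of_derive_bound F2 F3); auto; lra. }
    assert (M3 * t <= M3 * h)
      by (apply Rmult_le_compat_l; [pose proof (bF3 0); pose proof (Rabs_pos (F3 0)) |]; lra).
    unfold phi2.
    replace (F2 (x + t) + F2 (x - t) - 2 * F2 x) with ((F2 (x + t) - F2 x) - (F2 x - F2 (x - t))) by ring.
    eapply Rle_trans; [apply Rabs_triang|]. rewrite Rabs_Ropp. lra. }
  assert (H := Rabs_le_of_second_derive_bound
    (fun t => F (x + t) + F (x - t) - 2 * F x - t ^ 2 * F2 x)
    (fun t => F1 (x + t) - F1 (x - t) - 2 * t * F2 x) phi2 h (2 * M3 * h) Hh).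
  replace (F (x + h) - 2 * F x + F (x - h) - h ^ 2 * F2 x)
    with (F (x + h) + F (x - h) - 2 * F x - h ^ 2 * F2 x) by ring.
  replace (2 * M3 * h ^ 3) with (2 * M3 * h * h ^ 2) by ring.
  apply H; auto.
  - rewrite Rplus_0_r, Rminus_0_r. ring.
  - rewrite Rplus_0_r, Rminus_0_r. ring.
  - intros t. auto_derive; [repeat split; eexists; apply dF|].
    change (fun y : R => F y) with F. rewrite !(is_derive_unique F _ _ (dF _)).
    unfold Rminus. ring.
  - intros t. auto_derive; [repeat split; eexists; apply dF1|].
    change (fun y : R => F1 y) with F1. rewrite !(is_derive_unique F1 _ _ (dF1 _)).
    unfold phi2, Rminus. ring.
Qed.

End CentralDifference.

Definition boundary_slope (n rL rR a b : R) : R := ((rR - 1) * b - (rL - 1) * a) / (n - 2 + rR + rL).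

Lemma Rabs_boundary_slope_le n r cL cR m a b : 4 <= n -> 0 <= r -> 0 <= cL -> 0 <= cR ->
  Rabs a <= m / n -> Rabs b <= m / n ->
  n * Rabs (boundary_slope n (cL * r) (cR * r) a b) <= 2 * m * (cL + cR + 2) * ((r + 1) / n).
Proof.
  intros Hn Hr HcL HcR Ha Hb.
  assert (Hm : 0 <= m / n) by (pose proof (Rabs_pos a); lra).
  assert (Hden : n / 2 <= n - 2 + cR * r + cL * r) by nra.
  assert (Hnum : Rabs ((cR * r - 1) * b - (cL * r - 1) * a) <= (cL + cR + 2) * (r + 1) * (m / n)).
  { eapply Rle_trans; [apply Rabs_triang|]. rewrite Rabs_Ropp, !Rabs_mult.
    assert (Rabs (cR * r - 1) <= cR * r + 1) by (apply Rabs_le; nra).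
    assert (Rabs (cL * r - 1) <= cL * r + 1) by (apply Rabs_le; nra).
    assert (Rabs (cR * r - 1) * Rabs b <= (cR * r + 1) * (m / n))
      by (apply Rmult_le_compat; auto using Rabs_pos).
    assert (Rabs (cL * r - 1) * Rabs a <= (cL * r + 1) * (m / n))
      by (apply Rmult_le_compat; auto using Rabs_pos).
    nra. }
  unfold boundary_slope, Rdiv at 1.
  rewrite Rabs_mult, Rabs_inv, (Rabs_right (n - 2 + cR * r + cL * r)) by lra.
  apply (Rmult_le_reg_r (n - 2 + cR * r + cL * r)); [lra|].
  replace (n * (Rabs ((cR * r - 1) * b - (cL * r - 1) * a) * / (n - 2 + cR * r + cL * r))
             * (n - 2 + cR * r + cL * r))
    with (n * Rabs ((cR * r - 1) * b - (cL * r - 1) * a)) by (field; lra).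
  replace (2 * m * (cL + cR + 2) * ((r + 1) / n) * (n - 2 + cR * r + cL * r))
    with (n * ((cL + cR + 2) * (r + 1) * (m / n)) * (2 * (n - 2 + cR * r + cL * r) / n))
    by (field; lra).
  assert (1 <= 2 * (n - 2 + cR * r + cL * r) / n)
    by (unfold Rdiv; rewrite <- (Rinv_r n) by lra;
        apply Rmult_le_compat_r; [left; apply Rinv_0_lt_compat |]; lra).
  assert (0 <= n * ((cL + cR + 2) * (r + 1) * (m / n)))
    by (apply Rmult_le_pos; [lra | apply Rmult_le_pos; [nra | exact Hm]]).
  nra.
Qed.

Ltac decide_nat_tests := repeat match goal with
  | |- context [ (?a <=? ?b)%nat ] => destruct (Nat.leb_spec a b); try (exfalso; lia)
  | |- context [ (?a <? ?b)%nat ] => destruct (Nat.ltb_spec a b); try (exfalso; lia)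
  | |- context [ (?a =? ?b)%nat ] => destruct (Nat.eqb_spec a b); try (exfalso; lia)
  end; simpl andb; simpl orb; cbv iota.

Section DiscreteApproximation.

Variables alpha alphaL alphaR beta : R.
Hypothesis Halpha : 0 < alpha.
Hypothesis HalphaL : 0 < alphaL.
Hypothesis HalphaR : 0 < alphaR.
Variables F F1 F2 F3 : R -> R.
Hypothesis dF : forall t, is_derive F t (F1 t).
Hypothesis dF1 : forall t, is_derive F1 t (F2 t).
Hypothesis dF2 : forall t, is_derive F2 t (F3 t).
Hypothesis F_0 : F 0 = 0.
Hypothesis F_1 : F 1 = 0.

Definition bulk_rate (N : nat) : R := INR N ^ 2 * alpha.
Definition boundary_rate (N : nat) : R := Rpower (INR N) (2 - beta).
Definition rhoL (N : nat) : R := bulk_rate N / (boundary_rate N * alphaL).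
Definition rhoR (N : nat) : R := bulk_rate N / (boundary_rate N * alphaR).
Definition F_first (N : nat) : R := F (INR 1 / INR N).
Definition F_last (N : nat) : R := F (INR (N - 1) / INR N).
Definition slope (N : nat) : R := boundary_slope (INR N) (rhoL N) (rhoR N) (F_first N) (F_last N).
Definition offset (N : nat) : R := (rhoL N - 1) * (F_first N + slope N).

(* In the bulk, [GN N] is [F] plus the affine correction [offset N + slope N * x], which the
   discrete Laplacian does not see; [offset] and [slope] solve the two boundary equations, so
   that the boundary sites also see the plain Dirichlet Laplacian of [F]. *)
Definition GN (N x : nat) : R :=
  if ((x =? 0)%nat || (N <=? x)%nat)%bool then 0
  else F (INR x / INR N) + offset N + slope N * INR x.

Lemma boundary_rate_pos N : 0 < boundary_rate N.
Proof. apply exp_pos. Qed.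

Lemma rho_eq N c : (0 < N)%nat -> 0 < c ->
  bulk_rate N / (boundary_rate N * c) = alpha / c * Rpower (INR N) beta.
Proof.
  intros HN Hc. assert (0 < INR N) by (apply lt_0_INR; auto).
  unfold bulk_rate, boundary_rate. replace (2 - beta) with (INR 2 + - beta) by (simpl; ring).
  rewrite Rpower_plus, Rpower_Ropp, Rpower_pow by auto.
  assert (0 < Rpower (INR N) beta) by apply exp_pos.
  field. split; lra.
Qed.

Lemma rhoL_ge0 N : 0 <= rhoL N.
Proof.
  unfold rhoL, bulk_rate. pose proof (boundary_rate_pos N).
  apply Rmult_le_pos; [apply Rmult_le_pos; [apply pow2_ge_0 | lra]|].
  left; apply Rinv_0_lt_compat, Rmult_lt_0_compat; lra.
Qed.

Lemma rhoR_ge0 N : 0 <= rhoR N.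
Proof.
  unfold rhoR, bulk_rate. pose proof (boundary_rate_pos N).
  apply Rmult_le_pos; [apply Rmult_le_pos; [apply pow2_ge_0 | lra]|].
  left; apply Rinv_0_lt_compat, Rmult_lt_0_compat; lra.
Qed.

Lemma left_boundary_balance N :
  boundary_rate N * alphaL * (F_first N + offset N + slope N) = bulk_rate N * (F_first N + slope N).
Proof. unfold offset, rhoL. pose proof (boundary_rate_pos N). field. lra. Qed.

Lemma right_boundary_balance N : (4 <= N)%nat ->
  boundary_rate N * alphaR * (F_last N + offset N + slope N * (INR N - 1))
  = bulk_rate N * (F_last N - slope N).
Proof.
  intros HN. pose proof (boundary_rate_pos N). pose proof (rhoL_ge0 N). pose proof (rhoR_ge0 N).
  assert (4 <= INR N) by (apply (le_INR 4) in HN; simpl in HN; lra).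
  assert (Hq : slope N * (INR N - 2 + rhoR N + rhoL N)
               = (rhoR N - 1) * F_last N - (rhoL N - 1) * F_first N)
    by (unfold slope, boundary_slope; field; lra).
  replace (F_last N + offset N + slope N * (INR N - 1)) with (rhoR N * (F_last N - slope N))
    by (unfold offset; nra).
  unfold rhoR. field. lra.
Qed.

Lemma genA_GN_interior N x : (4 <= N)%nat -> (1 <= x <= N - 1)%nat ->
  genA alpha alphaL alphaR beta N (GN N) x =
  bulk_rate N * (F (INR (x - 1) / INR N) - 2 * F (INR x / INR N) + F (INR (x + 1) / INR N)).
Proof.
  intros HN Hx. pose proof (left_boundary_balance N) as HL.
  pose proof (right_boundary_balance N HN) as HR.
  assert (HN0 : 0 < INR N) by (apply lt_0_INR; lia).
  unfold genA, GN. fold (bulk_rate N) (boundary_rate N).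
  decide_nat_tests.
  - subst x. replace (N - 1 + 1)%nat with N by lia.
    rewrite !minus_INR by lia. unfold F_last in HR. rewrite minus_INR in HR by lia.
    replace (INR N / INR N) with 1 by (field; lra). simpl INR in *. rewrite F_1.
    lra.
  - rewrite minus_INR, plus_INR by lia. simpl INR. ring.
  - subst x. simpl INR. replace (0 / INR N) with 0 by (unfold Rdiv; ring). rewrite F_0.
    unfold F_first in HL. simpl INR in HL. lra.
Qed.

Variables M1 M3 : R.
Hypothesis bF1 : forall t, Rabs (F1 t) <= M1.
Hypothesis bF3 : forall t, Rabs (F3 t) <= M3.
Hypothesis F2_0 : F2 0 = 0.
Hypothesis F2_1 : F2 1 = 0.

Lemma Rabs_genA_GN_sub_le N x : (4 <= N)%nat -> (x <= N)%nat ->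
  Rabs (genA alpha alphaL alphaR beta N (GN N) x - alpha * F2 (INR x / INR N))
    <= 2 * alpha * M3 / INR N.
Proof.
  intros HN Hx.
  assert (HN0 : 0 < INR N) by (apply lt_0_INR; lia).
  assert (HM3 : 0 <= M3) by (pose proof (bF3 0); pose proof (Rabs_pos (F3 0)); lra).
  assert (0 <= 2 * alpha * M3 / INR N)
    by (apply Rmult_le_pos; [nra | left; apply Rinv_0_lt_compat; lra]).
  destruct (Nat.eq_dec x 0) as [-> | Hx0]; [| destruct (Nat.eq_dec x N) as [-> | HxN]].
  - unfold genA. decide_nat_tests. simpl INR.
    replace (0 / INR N) with 0 by (unfold Rdiv; ring). rewrite F2_0, Rmult_0_r, Rminus_0_r, Rabs_R0.
    auto.
  - unfold genA. decide_nat_tests.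
    replace (INR N / INR N) with 1 by (field; lra). rewrite F2_1, Rmult_0_r, Rminus_0_r, Rabs_R0.
    auto.
  - rewrite genA_GN_interior by lia.
    set (h := / INR N). set (X := INR x / INR N).
    replace (INR (x - 1) / INR N) with (X - h) by (unfold X, h; rewrite minus_INR by lia; simpl; field; lra).
    replace (INR (x + 1) / INR N) with (X + h) by (unfold X, h; rewrite plus_INR; simpl; field; lra).
    replace (bulk_rate N * (F (X - h) - 2 * F X + F (X + h)) - alpha * F2 X)
      with (alpha * INR N ^ 2 * (F (X + h) - 2 * F X + F (X - h) - h ^ 2 * F2 X))
      by (unfold bulk_rate, h; field; lra).
    rewrite Rabs_mult, Rabs_right by (apply Rle_ge, Rmult_le_pos; [lra | apply pow2_ge_0]).
    eapply Rle_trans.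
    + apply Rmult_le_compat_l; [apply Rmult_le_pos; [lra | apply pow2_ge_0]|].
      apply (central_difference_error F F1 F2 F3 M3); auto.
      unfold h. left; apply Rinv_0_lt_compat; lra.
    + unfold h. right. field. lra.
Qed.

Lemma Rabs_GN_sub_le N x : (4 <= N)%nat -> (x <= N)%nat ->
  Rabs (GN N x - F (INR x / INR N)) <= Rabs (offset N) + INR N * Rabs (slope N).
Proof.
  intros HN Hx.
  assert (HN0 : 0 < INR N) by (apply lt_0_INR; lia).
  assert (0 <= Rabs (offset N) + INR N * Rabs (slope N))
    by (pose proof (Rabs_pos (offset N)); pose proof (Rabs_pos (slope N)); nra).
  unfold GN.
  destruct (Nat.eq_dec x 0) as [-> | Hx0]; [| destruct (Nat.eq_dec x N) as [-> | HxN]];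
    decide_nat_tests.
  - simpl INR. replace (0 / INR N) with 0 by (unfold Rdiv; ring).
    rewrite F_0, Rminus_0_r, Rabs_R0. auto.
  - replace (INR N / INR N) with 1 by (field; lra). rewrite F_1, Rminus_0_r, Rabs_R0. auto.
  - replace (F (INR x / INR N) + offset N + slope N * INR x - F (INR x / INR N))
      with (offset N + slope N * INR x) by ring.
    eapply Rle_trans; [apply Rabs_triang|].
    rewrite Rabs_mult, (Rabs_right (INR x)), (Rmult_comm (INR N)) by (apply Rle_ge, pos_INR).
    apply Rplus_le_compat_l, Rmult_le_compat_l; [apply Rabs_pos | apply le_INR; lia].
Qed.

Lemma Rabs_F_first_le N : (4 <= N)%nat -> Rabs (F_first N) <= M1 / INR N.
Proof.
  intros HN. assert (HN0 : 0 < INR N) by (apply lt_0_INR; lia).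
  unfold F_first. simpl INR.
  replace (F (1 / INR N)) with (F (1 / INR N) - F 0) by (rewrite F_0; ring).
  replace (M1 / INR N) with (M1 * (1 / INR N - 0)) by (field; lra).
  apply (Rabs_sub_le_of_derive_bound F F1); auto.
  left; apply Rdiv_lt_0_compat; lra.
Qed.

Lemma Rabs_F_last_le N : (4 <= N)%nat -> Rabs (F_last N) <= M1 / INR N.
Proof.
  intros HN. assert (HN0 : 0 < INR N) by (apply lt_0_INR; lia).
  unfold F_last. rewrite minus_INR by lia. simpl INR.
  replace (F ((INR N - 1) / INR N)) with (- (F 1 - F ((INR N - 1) / INR N))) by (rewrite F_1; ring).
  rewrite Rabs_Ropp.
  replace (M1 / INR N) with (M1 * (1 - (INR N - 1) / INR N)) by (field; lra).
  apply (Rabs_sub_le_of_derive_bound F F1); auto.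
  apply (Rmult_le_reg_r (INR N)); auto. unfold Rdiv.
  rewrite Rmult_assoc, Rinv_l by lra. lra.
Qed.

Lemma correction_le N : (4 <= N)%nat -> 0 <= beta <= 1 ->
  let cL := alpha / alphaL in let C1 := 2 * M1 * (cL + alpha / alphaR + 2) in
  Rabs (offset N) + INR N * Rabs (slope N)
    <= ((cL + 1) * (M1 + 2 * C1) + C1) * ((Rpower (INR N) beta + 1) / INR N).
Proof.
  intros HN Hbeta cL C1.
  assert (HN4 : 4 <= INR N) by (apply (le_INR 4) in HN; simpl in HN; lra).
  set (r := Rpower (INR N) beta). set (e := (r + 1) / INR N).
  assert (Hr : 0 < r <= INR N).
  { split; [apply exp_pos|]. unfold r. rewrite <- (Rpower_1 (INR N)) at 2 by lra.
    apply Rle_Rpower; lra. }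
  assert (He : 0 <= e <= 2).
  { unfold e. split; [apply Rmult_le_pos; [lra | left; apply Rinv_0_lt_compat; lra]|].
    apply (Rmult_le_reg_r (INR N)); [lra|]. unfold Rdiv. rewrite Rmult_assoc, Rinv_l; lra. }
  assert (HcL : 0 <= cL) by (apply Rmult_le_pos; [lra | left; apply Rinv_0_lt_compat; lra]).
  assert (HcR : 0 <= alpha / alphaR) by (apply Rmult_le_pos; [lra | left; apply Rinv_0_lt_compat; lra]).
  assert (HrL : rhoL N = cL * r) by (apply rho_eq; auto; lia).
  assert (HrR : rhoR N = alpha / alphaR * r) by (apply rho_eq; auto; lia).
  pose proof (Rabs_F_first_le N HN) as Ha. pose proof (Rabs_F_last_le N HN) as Hb.
  assert (HM1 : 0 <= M1) by (pose proof (bF1 0); pose proof (Rabs_pos (F1 0)); lra).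
  assert (Hq : INR N * Rabs (slope N) <= C1 * e).
  { unfold slope, C1, e. rewrite HrL, HrR. apply Rabs_boundary_slope_le; auto; lra. }
  assert (Hq' : Rabs (slope N) <= C1 * e / INR N).
  { apply (Rmult_le_reg_l (INR N)); [lra|]. replace (INR N * (C1 * e / INR N)) with (C1 * e) by (field; lra). auto. }
  assert (Hp : Rabs (offset N) <= (cL + 1) * e * (M1 + C1 * e)).
  { unfold offset. rewrite HrL, Rabs_mult.
    assert (Rabs (cL * r - 1) <= (cL + 1) * (r + 1)) by (apply Rabs_le; nra).
    assert (Rabs (F_first N + slope N) <= M1 / INR N + C1 * e / INR N)
      by (eapply Rle_trans; [apply Rabs_triang | lra]).
    eapply Rle_trans; [apply Rmult_le_compat; eauto using Rabs_pos|].
    unfold e. right. field. lra. }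
  assert (0 <= C1) by (unfold C1; nra).
  assert ((cL + 1) * e * (M1 + C1 * e) <= (cL + 1) * e * (M1 + 2 * C1))
    by (apply Rmult_le_compat_l; nra).
  nra.
Qed.

End DiscreteApproximation.

Lemma sup_grid_ge0 N h : 0 <= sup_grid N h.
Proof.
  unfold sup_grid. induction (map h (seq 0 (S N))) as [| y l IH]; simpl; [lra|].
  eapply Rle_trans; [exact IH | apply Rmax_r].
Qed.

Lemma sup_grid_le N h B : 0 <= B -> (forall x, (x <= N)%nat -> h x <= B) -> sup_grid N h <= B.
Proof.
  intros HB Hh. unfold sup_grid.
  assert (Hl : forall y, In y (map h (seq 0 (S N))) -> y <= B).
  { intros y Hy. apply in_map_iff in Hy. destruct Hy as [x [<- Hx]].
    apply in_seq in Hx. apply Hh. lia. }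
  induction (map h (seq 0 (S N))) as [| y l IH]; simpl; auto.
  apply Rmax_lub; [apply Hl; left | apply IH; intros; apply Hl; right]; auto.
Qed.

Lemma is_lim_seq_sup_grid (h : nat -> nat -> R) (b : nat -> R) N0 :
  (forall N x, 0 <= h N x) -> (forall N x, (N0 <= N)%nat -> (x <= N)%nat -> h N x <= b N) ->
  is_lim_seq b 0 -> is_lim_seq (fun N => sup_grid N (h N)) 0.
Proof.
  intros Hpos Hb Hlim.
  apply is_lim_seq_le_le_loc with (u := fun _ => 0) (w := b); [| apply is_lim_seq_const | exact Hlim].
  exists N0. intros N HN. split; [apply sup_grid_ge0|].
  apply sup_grid_le; [eapply Rle_trans; [apply (Hpos N 0%nat) | apply Hb; lia]|].
  intros; apply Hb; auto.
Qed.

Lemma is_lim_seq_inv_INR : is_lim_seq (fun N => / INR N) 0.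
Proof.
  replace (Finite 0) with (Rbar_inv p_infty) by reflexivity.
  apply is_lim_seq_inv; [apply is_lim_seq_INR | discriminate].
Qed.

Lemma is_lim_seq_Rpower_INR e : e < 0 -> is_lim_seq (fun N => Rpower (INR N) e) 0.
Proof.
  intros He. apply is_lim_seq_spec. intros eps.
  destruct (INR_unbounded (exp (ln eps / e))) as [N0 HN0].
  exists N0. intros N HN.
  assert (HNT : exp (ln eps / e) < INR N) by (eapply Rlt_le_trans; [exact HN0 | apply le_INR; lia]).
  rewrite Rminus_0_r, Rabs_right by (apply Rle_ge; left; apply exp_pos).
  unfold Rpower. rewrite <- (exp_ln eps) by apply cond_pos.
  apply exp_increasing.
  assert (Hln : ln (exp (ln eps / e)) < ln (INR N)) by (apply ln_increasing; [apply exp_pos | auto]).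
  rewrite ln_exp in Hln.
  apply (Rmult_lt_compat_r (- e)) in Hln; [| lra].
  replace (ln eps / e * - e) with (- ln eps) in Hln by (field; lra). lra.
Qed.

Lemma is_lim_seq_Rpower_INR_plus_1_div beta : beta < 1 ->
  is_lim_seq (fun N => (Rpower (INR N) beta + 1) / INR N) 0.
Proof.
  intros Hbeta.
  apply is_lim_seq_ext_loc with (u := fun N => Rpower (INR N) (beta - 1) + / INR N).
  - exists 1%nat. intros N HN. assert (0 < INR N) by (apply lt_0_INR; lia).
    unfold Rminus. rewrite Rpower_plus, Rpower_Ropp, Rpower_1 by lra. field. lra.
  - replace (Finite 0) with (Rbar_plus 0 0) by (simpl; f_equal; ring).
    apply is_lim_seq_plus'; [apply is_lim_seq_Rpower_INR; lra | apply is_lim_seq_inv_INR].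
Qed.

Section TestFunctionApproximation.

Variables alpha alphaL alphaR beta : R.
Hypothesis Halpha : 0 < alpha.
Hypothesis HalphaL : 0 < alphaL.
Hypothesis HalphaR : 0 < alphaR.
Hypothesis Hbeta : 0 <= beta < 1.
Variable G : R -> R.
Hypothesis HGc : cont_on_01 G.
Hypothesis HGS : in_S alpha G.

Local Notation F j := (sine_series (sine_coefs G) j).

Lemma derive_F j t : (j <= 2)%nat -> is_derive (F j) t (F (S j) t).
Proof. intros; apply is_derive_sine_series; [apply (sine_coefs_decay alpha) |]; auto. Qed.

Lemma Rabs_F_le j t : (j <= 3)%nat -> Rabs (F j t) <= Series (sine_majorant (sine_coefs G) j).
Proof. intros; apply Rabs_sine_series_le; [apply (sine_coefs_decay alpha) |]; auto. Qed.

Lemma GN_sub_G_le : exists C, forall N x, (4 <= N)%nat -> (x <= N)%nat ->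
  Rabs (GN alpha alphaL alphaR beta (F 0) N x - G (INR x / INR N))
    <= C * ((Rpower (INR N) beta + 1) / INR N).
Proof.
  eexists. intros N x HN Hx.
  rewrite (eq_sine_series alpha G) by (auto; apply INR_div_INR_bounds; lia).
  eapply Rle_trans; [apply (Rabs_GN_sub_le alpha alphaL alphaR beta (F 0));
                     auto using sine_series_0_at_0, sine_series_0_at_1|].
  apply (correction_le alpha alphaL alphaR beta Halpha HalphaL HalphaR (F 0) (F 1))
    with (M1 := Series (sine_majorant (sine_coefs G) 1));
    auto using sine_series_0_at_0, sine_series_0_at_1, derive_F, Rabs_F_le; lra.
Qed.

Lemma genA_GN_sub_le : exists C, forall N x, (4 <= N)%nat -> (x <= N)%nat ->
  Rabs (genA alpha alphaL alphaR beta N (GN alpha alphaL alphaR beta (F 0) N) x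
        - alpha * second_deriv01 G (INR x / INR N)) <= C * / INR N.
Proof.
  eexists. intros N x HN Hx.
  rewrite (second_deriv01_eq_sine_series alpha G) by (auto; apply INR_div_INR_bounds; lia).
  apply (Rabs_genA_GN_sub_le alpha alphaL alphaR beta Halpha HalphaL HalphaR (F 0) (F 1) (F 2) (F 3))
    with (M3 := Series (sine_majorant (sine_coefs G) 3));
    auto using sine_series_0_at_0, sine_series_0_at_1, sine_series_2_at_0, sine_series_2_at_1,
      derive_F, Rabs_F_le.
Qed.

End TestFunctionApproximation.

Theorem lemma4p2 (alpha alphaL alphaR beta : R)
  (Halpha : 0 < alpha) (HalphaL : 0 < alphaL) (HalphaR : 0 < alphaR)
  (Hbeta : 0 <= beta < 1)
  (G : R -> R) (HGc : cont_on_01 G) (HGS : in_S alpha G) :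
  exists GN : nat -> nat -> R,
    (forall N : nat, GN N 0%nat = 0 /\ GN N N = 0) /\
    is_lim_seq (fun N : nat =>
      sup_grid N (fun x => Rabs (GN N x - G (INR x / INR N)))) 0 /\
    is_lim_seq (fun N : nat =>
      sup_grid N (fun x => Rabs (genA alpha alphaL alphaR beta N (GN N) x
                                 - alpha * second_deriv01 G (INR x / INR N)))) 0.
Proof.
  exists (GN alpha alphaL alphaR beta (sine_series (sine_coefs G) 0)). split; [| split].
  - intros N. unfold GN. split; [reflexivity|]. now rewrite Nat.leb_refl, Bool.orb_true_r.
  - destruct (GN_sub_G_le alpha alphaL alphaR beta Halpha HalphaL HalphaR Hbeta G HGc HGS) as [C HC].
    apply is_lim_seq_sup_grid with (N0 := 4%nat) (b := fun N => C * ((Rpower (INR N) beta + 1) / INR N));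
      [intros; apply Rabs_pos | exact HC |].
    apply is_lim_seq_scal_l_0, is_lim_seq_Rpower_INR_plus_1_div. lra.
  - destruct (genA_GN_sub_le alpha alphaL alphaR beta Halpha HalphaL HalphaR G HGc HGS) as [C HC].
    apply is_lim_seq_sup_grid with (N0 := 4%nat) (b := fun N => C * / INR N);
      [intros; apply Rabs_pos | exact HC |].
    apply is_lim_seq_scal_l_0, is_lim_seq_inv_INR.
Qed.
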